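(* Let $f$ be a $C^1$ diffeomorphism of $M=\mathbb{R}^d/\mathbb{Z}^d$. If $x\in M$ is regularly hyperbolic, then $\Gamma_{o(x)}$ has a continuous inverse on $\mathcal{N}$.
   Context: Tangent spaces identified with $\mathbb{R}^d$. $o(x)=(f^k(x))_{k}$, $(\Gamma_{\mathbf{x}}\eta)_k=\eta_k-Df(x_{k-1})\eta_{k-1}$. $\mathcal{N}$ is the Fréchet space of sequences $(\eta_k)_{k\in\mathbb{Z}}$ in $\mathbb{R}^d$ with $\limsup_{|k|\to\infty}\frac1{|k|}\log|\eta_k|\le0$, topologized by the norms $\|\eta\|_n=\sup_k e^{-|k|/n}|\eta_k|$, $n\in\mathbb{N}$. Regular hyperbolicity of $x$: with $x_k=f^k(x)$, there are $0<\lambda<1$, $Df$-invariant splittings $T_{x_k}M=E^s(x_k)\oplus E^u(x_k)$, and for each small $\varepsilon>0$ a constant $c(x,\varepsilon)$ with $|Df^j(x_k)\eta|\le c\lambda^je^{\varepsilon|k|}|\eta|$ on $E^s(x_k)$, $|Df^{-j}(x_k)\eta|\le c\lambda^je^{\varepsilon|k|}|\eta|$ on $E^u(x_k)$ ($j>0$), and $|\eta^s|,|\eta^u|\le ce^{\varepsilon|k|}|\eta|$ for the splitting $\eta=\eta^s+\eta^u$ in $T_{x_k}M$. *)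

From Stdlib Require Vectors.Fin.
From Stdlib Require Import Reals ZArith.
Open Scope R_scope.

(** Vectors of R^d (tangent spaces of M = R^d/Z^d identified with R^d) *)
Definition vec (d : nat) := Fin.t d -> R.
Definition mat (d : nat) := Fin.t d -> Fin.t d -> R.

Fixpoint fsum {d : nat} : (Fin.t d -> R) -> R :=
  match d with
  | O => fun _ => 0
  | S d' => fun f => f Fin.F1 + fsum (fun i => f (Fin.FS i))
  end.

Definition vadd {d} (u v : vec d) : vec d := fun i => u i + v i.
Definition vsub {d} (u v : vec d) : vec d := fun i => u i - v i.
Definition vscale {d} (a : R) (v : vec d) : vec d := fun i => a * v i.
Definition vzero {d} : vec d := fun _ => 0.
Definition vnorm {d} (v : vec d) : R := sqrt (fsum (fun i => v i * v i)).
Definition mapply {d} (A : mat d) (v : vec d) : vec d :=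
  fun i => fsum (fun j => A i j * v j).

Definition is_int_vec {d} (v : vec d) : Prop := forall i, exists z : Z, v i = IZR z.

Definition has_derivative {d} (F : vec d -> vec d) (A : mat d) (x : vec d) : Prop :=
  forall eps, eps > 0 -> exists delta, delta > 0 /\
    forall h, vnorm h < delta ->
      vnorm (vsub (vsub (F (vadd x h)) (F x)) (mapply A h)) <= eps * vnorm h.

Definition is_C1 {d} (F : vec d -> vec d) (DF : vec d -> mat d) : Prop :=
  (forall x, has_derivative F (DF x) x) /\
  (forall x i j eps, eps > 0 -> exists delta, delta > 0 /\
      forall y, vnorm (vsub y x) < delta -> Rabs (DF y i j - DF x i j) < eps).

(** F : R^d -> R^d descends to a map of the torus R^d/Z^d *)
Definition descends {d} (F : vec d -> vec d) : Prop :=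
  forall x n, is_int_vec n -> is_int_vec (vsub (F (vadd x n)) (F x)).

(** f is a C^1 diffeomorphism of M = R^d/Z^d, given by a lift F with
    derivative DF, whose inverse f^{-1} is given by a lift G with derivative DG. *)
Definition torus_C1_diffeo {d} (F G : vec d -> vec d) (DF DG : vec d -> mat d) : Prop :=
  is_C1 F DF /\ is_C1 G DG /\ descends F /\ descends G /\
  (forall x, is_int_vec (vsub (F (G x)) x)) /\
  (forall x, is_int_vec (vsub (G (F x)) x)).

(** lift of the orbit x_k = f^k(x), k in Z *)
Definition orbit {d} (F G : vec d -> vec d) (x : vec d) (k : Z) : vec d :=
  if (0 <=? k)%Z then Nat.iter (Z.to_nat k) F x else Nat.iter (Z.to_nat (- k)) G x.

Fixpoint Dfpow {d} (DF : vec d -> mat d) (X : Z -> vec d) (j : nat) (k : Z) (v : vec d)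
  : vec d :=
  match j with
  | O => v
  | S j' => mapply (DF (X (k + Z.of_nat j')%Z)) (Dfpow DF X j' k v)
  end.

(** Df^{-j}(x_k) v = D(f^{-1})(x_{k-j+1}) ... D(f^{-1})(x_k) v, j >= 0 *)
Fixpoint Dfinvpow {d} (DG : vec d -> mat d) (X : Z -> vec d) (j : nat) (k : Z) (v : vec d)
  : vec d :=
  match j with
  | O => v
  | S j' => mapply (DG (X (k - Z.of_nat j')%Z)) (Dfinvpow DG X j' k v)
  end.

Definition is_subspace {d} (E : vec d -> Prop) : Prop :=
  E vzero /\ (forall u v, E u -> E v -> E (vadd u v)) /\
  (forall a v, E v -> E (vscale a v)).

Definition absZ (k : Z) : R := IZR (Z.abs k).

Definition regularly_hyperbolic {d} (F G : vec d -> vec d) (DF DG : vec d -> mat d)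
  (x : vec d) : Prop :=
  let X := orbit F G x in
  exists lambda, 0 < lambda < 1 /\
  exists Es Eu : Z -> vec d -> Prop,
    (forall k, is_subspace (Es k) /\ is_subspace (Eu k) /\
       (forall v, exists vs vu, Es k vs /\ Eu k vu /\ v = vadd vs vu) /\
       (forall v, Es k v -> Eu k v -> v = vzero)) /\
    (forall k, (forall v, Es k v -> Es (k + 1)%Z (mapply (DF (X k)) v)) /\
               (forall w, Es (k + 1)%Z w -> exists v, Es k v /\ mapply (DF (X k)) v = w) /\
               (forall v, Eu k v -> Eu (k + 1)%Z (mapply (DF (X k)) v)) /\
               (forall w, Eu (k + 1)%Z w -> exists v, Eu k v /\ mapply (DF (X k)) v = w)) /\
    exists eps0, eps0 > 0 /\
    forall eps, 0 < eps < eps0 -> exists c : R,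
      (forall k (j : nat) v, (0 < j)%nat -> Es k v ->
         vnorm (Dfpow DF X j k v) <= c * lambda ^ j * exp (eps * absZ k) * vnorm v) /\
      (forall k (j : nat) v, (0 < j)%nat -> Eu k v ->
         vnorm (Dfinvpow DG X j k v) <= c * lambda ^ j * exp (eps * absZ k) * vnorm v) /\
      (forall k v vs vu, Es k vs -> Eu k vu -> v = vadd vs vu ->
         vnorm vs <= c * exp (eps * absZ k) * vnorm v /\
         vnorm vu <= c * exp (eps * absZ k) * vnorm v).

Definition seqR (d : nat) := Z -> vec d.

Definition Gamma {d} (DF : vec d -> mat d) (X : Z -> vec d) (eta : seqR d) : seqR d :=
  fun k => vsub (eta k) (mapply (DF (X (k - 1)%Z)) (eta (k - 1)%Z)).

(** eta in N : limsup_{|k|->oo} (1/|k|) log |eta_k| <= 0, i.e.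
    for all delta > 0, eventually |eta_k| <= exp(delta |k|). *)
Definition inN {d} (eta : seqR d) : Prop :=
  forall delta, delta > 0 -> exists K : Z, forall k : Z,
    (K <= Z.abs k)%Z -> vnorm (eta k) <= exp (delta * absZ k).

Definition seqsub {d} (a b : seqR d) : seqR d := fun k => vsub (a k) (b k).

(** ||eta||_n < r, where ||eta||_n = sup_k e^{-|k|/n} |eta_k| *)
Definition normN_lt {d} (n : nat) (eta : seqR d) (r : R) : Prop :=
  exists r', r' < r /\ forall k, exp (- (absZ k / INR n)) * vnorm (eta k) <= r'.

(** open subsets of the Frechet space N (topology of the norms ||.||_n, n >= 1;
    the norms increase with n, so balls form a neighbourhood base) *)
Definition openN {d} (U : seqR d -> Prop) : Prop :=
  forall eta, U eta -> inN eta /\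
    exists n : nat, (0 < n)%nat /\ exists r, r > 0 /\
      forall zeta, inN zeta -> normN_lt n (seqsub zeta eta) r -> U zeta.

Definition continuousN {d} (T : seqR d -> seqR d) : Prop :=
  forall V, openN V -> openN (fun eta => inN eta /\ V (T eta)).

(** The inverse of
    (Gamma eta)_k = eta_k - A_{k-1} eta_{k-1} is the discrete Green operator
      (Gamma^{-1} eta)_k = sum_{j>=0} Df^j(x_{k-j}) P^s eta_{k-j}
                         - sum_{j>=1} Df^{-j}(x_{k+j}) P^u eta_{k+j}.
    If |eta_m| <= M e^{a|m|} and the tempered constants are taken at level eps
    with lambda e^{2 eps + a} < 1, both series converge geometrically and give
    |(Gamma^{-1} eta)_k| <= K M e^{(2 eps + a)|k|}; telescoping shows that it
    solves Gamma xi = eta.  Iterating Gamma xi = eta along the splitting shows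
    that every tempered solution obeys the same bound (a priori estimate),
    whence injectivity and, by linearity, continuity for the norms ||.||_n. *)

From Stdlib Require Import Reals ZArith Lra Lia List.
From Stdlib Require Import ClassicalEpsilon FunctionalExtensionality.
From Coquelicot Require Import Coquelicot.
Open Scope R_scope.

Lemma fsum_ext {d} (f g : Fin.t d -> R) : (forall i, f i = g i) -> fsum f = fsum g.
Proof.
  induction d; simpl; intros H; auto.
  rewrite H, (IHd _ (fun i => g (Fin.FS i))); auto.
Qed.

Lemma fsum_plus {d} (f g : Fin.t d -> R) : fsum (fun i => f i + g i) = fsum f + fsum g.
Proof.
  induction d; simpl; [lra|].
  rewrite (IHd (fun i => f (Fin.FS i)) (fun i => g (Fin.FS i))). lra.
Qed.

Lemma fsum_scal {d} (a : R) (f : Fin.t d -> R) : fsum (fun i => a * f i) = a * fsum f.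
Proof. induction d; simpl; [lra|]. rewrite (IHd (fun i => f (Fin.FS i))). lra. Qed.

Lemma fsum_const {d} (a : R) : fsum (fun _ : Fin.t d => a) = INR d * a.
Proof. induction d; simpl; [lra|]. rewrite IHd. destruct d; simpl; lra. Qed.

Lemma fsum_le {d} (f g : Fin.t d -> R) : (forall i, f i <= g i) -> fsum f <= fsum g.
Proof.
  induction d; simpl; intros H; [lra|].
  pose proof (H Fin.F1).
  pose proof (IHd (fun i => f (Fin.FS i)) (fun i => g (Fin.FS i)) (fun i => H (Fin.FS i))).
  lra.
Qed.

Lemma fsum_nonneg {d} (f : Fin.t d -> R) : (forall i, 0 <= f i) -> 0 <= fsum f.
Proof.
  intros H. pose proof (fsum_le (fun _ => 0) f H) as Hle.
  rewrite fsum_const in Hle. lra.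
Qed.

Lemma fsum_term_le {d} (f : Fin.t d -> R) : (forall i, 0 <= f i) -> forall i, f i <= fsum f.
Proof.
  induction d; intros H i; [inversion i|].
  pose proof (fsum_nonneg (fun i => f (Fin.FS i)) (fun i => H (Fin.FS i))).
  pattern i; apply Fin.caseS'; simpl; [lra|].
  intros p. pose proof (IHd (fun i => f (Fin.FS i)) (fun i => H (Fin.FS i)) p).
  pose proof (H Fin.F1). simpl in *. lra.
Qed.

Lemma fsum_abs {d} (f : Fin.t d -> R) : Rabs (fsum f) <= fsum (fun i => Rabs (f i)).
Proof.
  induction d; simpl; [rewrite Rabs_R0; lra|].
  pose proof (IHd (fun i => f (Fin.FS i))).
  pose proof (Rabs_triang (f Fin.F1) (fsum (fun i => f (Fin.FS i)))). lra.
Qed.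

Lemma fsum_delta {d} (j : Fin.t d) (g : Fin.t d -> R) :
  fsum (fun i => g i * (if Fin.eq_dec i j then 1 else 0)) = g j.
Proof.
  induction d; [inversion j|].
  pattern j; apply Fin.caseS'; simpl.
  - destruct (Fin.eq_dec Fin.F1 Fin.F1) as [_|n]; [|congruence].
    rewrite (fsum_ext _ (fun _ => 0)), fsum_const; [ring|].
    intros i. destruct (Fin.eq_dec (Fin.FS i) Fin.F1); [discriminate|ring].
  - intros p. destruct (Fin.eq_dec Fin.F1 (Fin.FS p)); [discriminate|].
    rewrite (fsum_ext _ (fun i => g (Fin.FS i) * (if Fin.eq_dec i p then 1 else 0))).
    + rewrite IHd. ring.
    + intros i. destruct (Fin.eq_dec (Fin.FS i) (Fin.FS p)), (Fin.eq_dec i p); auto.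
      * apply Fin.FS_inj in e. congruence.
      * subst; congruence.
Qed.

Ltac vec_ring := apply functional_extensionality; intro; unfold vadd, vsub, vscale, vzero; ring.

(** Besides the Euclidean norm we use the l^1 norm; the two are
    equivalent, which gives a quasi-triangle inequality with constant
    [norm_const d = d + 1]; this is all the estimates below need. *)

Definition l1 {d} (v : vec d) : R := fsum (fun i => Rabs (v i)).

Lemma l1_nonneg {d} (v : vec d) : 0 <= l1 v.
Proof. apply fsum_nonneg. intros; apply Rabs_pos. Qed.

Lemma l1_vzero {d} : l1 (@vzero d) = 0.
Proof.
  unfold l1, vzero. rewrite (fsum_ext _ (fun _ => 0)); [rewrite fsum_const; ring|].
  intros; apply Rabs_R0.
Qed.

Lemma l1_add {d} (u v : vec d) : l1 (vadd u v) <= l1 u + l1 v.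
Proof. unfold l1, vadd. rewrite <- fsum_plus. apply fsum_le. intros; apply Rabs_triang. Qed.

Lemma vnorm_nonneg {d} (v : vec d) : 0 <= vnorm v.
Proof. apply sqrt_pos. Qed.

Lemma vnorm_le_l1 {d} (v : vec d) : vnorm v <= l1 v.
Proof.
  assert (Hsq : fsum (fun i => v i * v i) <= l1 v * l1 v).
  { unfold l1. induction d; simpl; [lra|].
    pose proof (IHd (fun i => v (Fin.FS i))).
    pose proof (l1_nonneg (fun i => v (Fin.FS i))). unfold l1 in *.
    pose proof (Rabs_pos (v Fin.F1)).
    assert (v Fin.F1 * v Fin.F1 = Rabs (v Fin.F1) * Rabs (v Fin.F1))
      by (rewrite <- Rabs_mult, Rabs_right; [lra|apply Rle_ge, Rle_0_sqr]).
    nra. }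
  unfold vnorm. rewrite <- (sqrt_square (l1 v)) by apply l1_nonneg.
  apply sqrt_le_1_alt. exact Hsq.
Qed.

Lemma coord_le {d} (v : vec d) i : Rabs (v i) <= vnorm v.
Proof.
  unfold vnorm. rewrite <- sqrt_Rsqr_abs. apply sqrt_le_1_alt. unfold Rsqr.
  apply (fsum_term_le (fun i => v i * v i)). intros; apply Rle_0_sqr.
Qed.

Lemma l1_le_vnorm {d} (v : vec d) : l1 v <= INR d * vnorm v.
Proof. unfold l1. rewrite <- fsum_const. apply fsum_le. intros; apply coord_le. Qed.

Lemma vnorm_le_coords {d} (v : vec d) c : (forall i, Rabs (v i) <= c) -> vnorm v <= INR d * c.
Proof.
  intros H. eapply Rle_trans; [apply vnorm_le_l1|].
  unfold l1. rewrite <- fsum_const. apply fsum_le. exact H.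
Qed.

Definition norm_const (d : nat) : R := INR d + 1.

Lemma norm_const_ge1 d : 1 <= norm_const d.
Proof. unfold norm_const. pose proof (pos_INR d). lra. Qed.

Lemma vnorm_add {d} (u v : vec d) : vnorm (vadd u v) <= norm_const d * (vnorm u + vnorm v).
Proof.
  pose proof (vnorm_le_l1 (vadd u v)). pose proof (l1_add u v).
  pose proof (l1_le_vnorm u). pose proof (l1_le_vnorm v).
  pose proof (vnorm_nonneg u). pose proof (vnorm_nonneg v).
  unfold norm_const. nra.
Qed.

Lemma vnorm_scale {d} a (v : vec d) : vnorm (vscale a v) = Rabs a * vnorm v.
Proof.
  unfold vnorm, vscale.
  rewrite (fsum_ext _ (fun i => (a * a) * (v i * v i))) by (intros; ring).
  rewrite fsum_scal, sqrt_mult_alt by apply Rle_0_sqr.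
  rewrite <- sqrt_Rsqr_abs. reflexivity.
Qed.

Lemma vnorm_sub {d} (u v : vec d) : vnorm (vsub u v) <= norm_const d * (vnorm u + vnorm v).
Proof.
  replace (vsub u v) with (vadd u (vscale (-1) v)) by vec_ring.
  pose proof (vnorm_add u (vscale (-1) v)) as H.
  rewrite vnorm_scale in H.
  replace (Rabs (-1)) with 1 in H by (rewrite Rabs_left; lra). lra.
Qed.

Lemma vnorm_vzero {d} : vnorm (@vzero d) = 0.
Proof.
  unfold vnorm, vzero. rewrite (fsum_ext _ (fun _ => 0)) by (intros; ring).
  rewrite fsum_const, Rmult_0_r. apply sqrt_0.
Qed.

Lemma vnorm_le0_eq {d} (v : vec d) : vnorm v <= 0 -> v = vzero.
Proof.
  intros H. apply functional_extensionality; intros i. unfold vzero.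
  pose proof (coord_le v i). pose proof (Rabs_pos (v i)).
  destruct (Req_dec (v i) 0) as [E|E]; auto.
  apply Rabs_no_R0 in E. lra.
Qed.

Definition mnorm {d} (A : mat d) : R := fsum (fun i => fsum (fun j => Rabs (A i j))).

Lemma mnorm_nonneg {d} (A : mat d) : 0 <= mnorm A.
Proof. apply fsum_nonneg; intros; apply fsum_nonneg; intros; apply Rabs_pos. Qed.

Lemma mapply_bound {d} (A : mat d) v : vnorm (mapply A v) <= mnorm A * vnorm v.
Proof.
  eapply Rle_trans; [apply vnorm_le_l1|]. unfold l1, mapply, mnorm.
  rewrite Rmult_comm, <- fsum_scal. apply fsum_le; intros i.
  eapply Rle_trans; [apply fsum_abs|]. rewrite <- fsum_scal. apply fsum_le; intros j.
  rewrite Rabs_mult. pose proof (coord_le v j). pose proof (Rabs_pos (A i j)). nra.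
Qed.

Lemma mapply_add {d} (A : mat d) u v : mapply A (vadd u v) = vadd (mapply A u) (mapply A v).
Proof.
  apply functional_extensionality; intros i. unfold mapply, vadd.
  rewrite <- fsum_plus. apply fsum_ext; intros; ring.
Qed.

Lemma mapply_scale {d} (A : mat d) a v : mapply A (vscale a v) = vscale a (mapply A v).
Proof.
  apply functional_extensionality; intros i. unfold mapply, vscale.
  rewrite <- fsum_scal. apply fsum_ext; intros; ring.
Qed.

Lemma mapply_sub {d} (A : mat d) u v : mapply A (vsub u v) = vsub (mapply A u) (mapply A v).
Proof.
  apply functional_extensionality; intros i. unfold mapply, vsub.
  rewrite (fsum_ext _ (fun j => A i j * u j + (-1) * (A i j * v j))) by (intros; ring).
  rewrite fsum_plus, fsum_scal. ring.
Qed.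

(** A matrix is determined by its action (test it on the standard basis). *)
Lemma mat_ext {d} (A B : mat d) : (forall v, mapply A v = mapply B v) -> forall i j, A i j = B i j.
Proof.
  intros H i j.
  set (e := fun i : Fin.t d => if Fin.eq_dec i j then 1 else 0).
  assert (He : forall M : mat d, mapply M e i = M i j) by (intros; apply fsum_delta).
  rewrite <- !He, H. reflexivity.
Qed.

(** First-order tangency at 0.  [tangent0 f L] says f(h) = L(h) + o(|h|);
    [has_derivative F A x] is literally [tangent0] of the increment
    [h |-> F(x+h) - F(x)] and [mapply A]. *)

Definition tangent0 {d} (f L : vec d -> vec d) : Prop :=
  forall eps, eps > 0 -> exists delta, delta > 0 /\
    forall h, vnorm h < delta -> vnorm (vsub (f h) (L h)) <= eps * vnorm h.

Definition increment {d} (F : vec d -> vec d) (x : vec d) : vec d -> vec d :=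
  fun h => vsub (F (vadd x h)) (F x).

Lemma has_derivative_tangent0 {d} (F : vec d -> vec d) A x :
  has_derivative F A x -> tangent0 (increment F x) (mapply A).
Proof. exact (fun H => H). Qed.

Lemma tangent0_lipschitz {d} (f : vec d -> vec d) A : tangent0 f (mapply A) ->
  exists L delta, 0 <= L /\ delta > 0 /\ forall h, vnorm h < delta -> vnorm (f h) <= L * vnorm h.
Proof.
  intros H. destruct (H 1 ltac:(lra)) as [delta [Hd Hh]].
  exists (norm_const d * (1 + mnorm A)), delta.
  pose proof (norm_const_ge1 d). pose proof (mnorm_nonneg A).
  split; [nra|split; auto]. intros h Hlt.
  replace (f h) with (vadd (vsub (f h) (mapply A h)) (mapply A h)) by vec_ring.
  eapply Rle_trans; [apply vnorm_add|].
  pose proof (Hh h Hlt). pose proof (mapply_bound A h). pose proof (vnorm_nonneg h). nra.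
Qed.

Definition vanishes0 {d} (f : vec d -> vec d) : Prop :=
  forall c, c > 0 -> exists r, r > 0 /\ forall h, vnorm h < r -> vnorm (f h) < c.

Lemma tangent0_vanishes0 {d} (f : vec d -> vec d) A : tangent0 f (mapply A) -> vanishes0 f.
Proof.
  intros H c Hc. destruct (tangent0_lipschitz f A H) as [L [delta [HL [Hd Hf]]]].
  exists (Rmin delta (c / (L + 1))).
  split; [apply Rmin_pos; [lra|apply Rdiv_lt_0_compat; lra]|].
  intros h Hh. pose proof (Rmin_l delta (c / (L + 1))). pose proof (Rmin_r delta (c / (L + 1))).
  pose proof (Hf h ltac:(lra)). pose proof (vnorm_nonneg h).
  assert (Hq : (L + 1) * (c / (L + 1)) = c) by (field; lra).
  nra.
Qed.

Lemma vanishes0_comp {d} (f g : vec d -> vec d) :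
  vanishes0 f -> vanishes0 g -> vanishes0 (fun h => g (f h)).
Proof.
  intros Hf Hg c Hc. destruct (Hg c Hc) as [r1 [Hr1 K1]]. destruct (Hf r1 Hr1) as [r2 [Hr2 K2]].
  exists r2. split; auto.
Qed.

Lemma tangent0_local {d} (f g L : vec d -> vec d) :
  tangent0 f L -> (exists r, r > 0 /\ forall h, vnorm h < r -> f h = g h) -> tangent0 g L.
Proof.
  intros H [r [Hr Hfg]] eps Heps. destruct (H eps Heps) as [delta [Hd Hh]].
  exists (Rmin delta r). split; [apply Rmin_pos; lra|].
  intros h Hlt. pose proof (Rmin_l delta r). pose proof (Rmin_r delta r).
  rewrite <- Hfg by lra. apply Hh. lra.
Qed.

Lemma share_bound eps D L : eps > 0 -> D > 0 -> 0 <= L -> D * (eps / (2 * D * (L + 1)) * L) <= eps / 2.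
Proof.
  intros. replace (D * (eps / (2 * D * (L + 1)) * L)) with ((eps / 2) * (L / (L + 1))) by (field; lra).
  assert (L / (L + 1) <= 1)
    by (apply Rmult_le_reg_r with (L + 1); [lra|]; unfold Rdiv; rewrite Rmult_assoc, Rinv_l by lra; lra).
  assert (0 <= L / (L + 1)) by (apply Rdiv_le_0_compat; lra). nra.
Qed.

Lemma tangent0_comp {d} (f g : vec d -> vec d) A B :
  tangent0 f (mapply A) -> tangent0 g (mapply B) ->
  tangent0 (fun h => g (f h)) (fun h => mapply B (mapply A h)).
Proof.
  intros Hf Hg eps Heps.
  destruct (tangent0_lipschitz f A Hf) as [L [dL [HL [HdL Hlip]]]].
  pose proof (norm_const_ge1 d) as HD. pose proof (mnorm_nonneg B) as HB.
  set (e1 := eps / (2 * norm_const d * (L + 1))).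
  set (e2 := eps / (2 * norm_const d * (mnorm B + 1))).
  assert (He1 : e1 > 0) by (unfold e1; apply Rdiv_lt_0_compat; nra).
  assert (He2 : e2 > 0) by (unfold e2; apply Rdiv_lt_0_compat; nra).
  destruct (Hg e1 He1) as [dG [HdG HGb]]. destruct (Hf e2 He2) as [dF [HdF HFb]].
  destruct (tangent0_vanishes0 f A Hf dG HdG) as [dS [HdS Hsmall]].
  exists (Rmin (Rmin dL dF) dS). split; [repeat apply Rmin_pos; lra|].
  intros h Hh. pose proof (Rmin_l (Rmin dL dF) dS). pose proof (Rmin_r (Rmin dL dF) dS).
  pose proof (Rmin_l dL dF). pose proof (Rmin_r dL dF).
  replace (vsub (g (f h)) (mapply B (mapply A h)))
    with (vadd (vsub (g (f h)) (mapply B (f h))) (mapply B (vsub (f h) (mapply A h))))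
    by (rewrite mapply_sub; vec_ring).
  eapply Rle_trans; [apply vnorm_add|].
  pose proof (HGb (f h) (Hsmall h ltac:(lra))) as HG1.
  pose proof (HFb h ltac:(lra)) as HF1.
  pose proof (Hlip h ltac:(lra)) as HL1.
  pose proof (mapply_bound B (vsub (f h) (mapply A h))).
  pose proof (vnorm_nonneg h). pose proof (vnorm_nonneg (f h)).
  pose proof (vnorm_nonneg (vsub (f h) (mapply A h))).
  assert (E1 : norm_const d * (e1 * L) <= eps / 2) by (apply share_bound; lra).
  assert (E2 : norm_const d * (mnorm B * e2) <= eps / 2)
    by (rewrite (Rmult_comm (mnorm B)); apply share_bound; lra).
  assert (e1 * vnorm (f h) <= e1 * (L * vnorm h)) by (apply Rmult_le_compat_l; lra).
  assert (mnorm B * vnorm (vsub (f h) (mapply A h)) <= mnorm B * (e2 * vnorm h))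
    by (apply Rmult_le_compat_l; lra).
  nra.
Qed.

(** Uniqueness of the tangent among homogeneous maps: rescale h into the ball. *)
Lemma tangent0_unique {d} (f L1 L2 : vec d -> vec d) :
  (forall a v, L1 (vscale a v) = vscale a (L1 v)) ->
  (forall a v, L2 (vscale a v) = vscale a (L2 v)) ->
  tangent0 f L1 -> tangent0 f L2 -> forall v, L1 v = L2 v.
Proof.
  intros H1 H2 T1 T2 v. set (w := vsub (L1 v) (L2 v)).
  pose proof (norm_const_ge1 d). pose proof (vnorm_nonneg v).
  assert (Hw : forall eps, eps > 0 -> vnorm w <= 2 * norm_const d * eps * vnorm v).
  { intros eps Heps.
    destruct (T1 eps Heps) as [d1 [Hd1 K1]]. destruct (T2 eps Heps) as [d2 [Hd2 K2]].
    set (t := Rmin d1 d2 / (2 * (vnorm v + 1))).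
    pose proof (Rmin_l d1 d2). pose proof (Rmin_r d1 d2).
    assert (Hm : Rmin d1 d2 > 0) by (apply Rmin_pos; lra).
    assert (Ht : t > 0) by (unfold t; apply Rdiv_lt_0_compat; lra).
    assert (Hn : vnorm (vscale t v) < Rmin d1 d2).
    { rewrite vnorm_scale, Rabs_right by lra.
      assert (t * (vnorm v + 1) = Rmin d1 d2 / 2) by (unfold t; field; lra). nra. }
    pose proof (K1 (vscale t v) ltac:(lra)). pose proof (K2 (vscale t v) ltac:(lra)).
    pose proof (vnorm_sub (vsub (f (vscale t v)) (L1 (vscale t v)))
                          (vsub (f (vscale t v)) (L2 (vscale t v)))) as Hs.
    replace (vsub (vsub (f (vscale t v)) (L1 (vscale t v))) (vsub (f (vscale t v)) (L2 (vscale t v))))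
      with (vscale (-t) w) in Hs by (unfold w; rewrite H1, H2; vec_ring).
    rewrite !vnorm_scale, Rabs_left, Rabs_right in * by lra.
    nra. }
  assert (Hz : vnorm w <= 0).
  { destruct (Rle_dec (vnorm w) 0) as [|Hpos]; auto. exfalso.
    set (eps := vnorm w / (4 * norm_const d * (vnorm v + 1))).
    assert (He : eps > 0) by (unfold eps; apply Rdiv_lt_0_compat; nra).
    pose proof (Hw eps He).
    assert (2 * norm_const d * eps * (vnorm v + 1) = vnorm w / 2) by (unfold eps; field; nra).
    nra. }
  apply vnorm_le0_eq in Hz. apply functional_extensionality; intros i.
  assert (Hi : w i = 0) by (rewrite Hz; reflexivity). unfold w, vsub in Hi. lra.
Qed.

Lemma int_sub {d} (u v : vec d) : is_int_vec u -> is_int_vec v -> is_int_vec (vsub u v).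
Proof.
  intros Hu Hv i. destruct (Hu i) as [a Ha], (Hv i) as [b Hb]. exists (a - b)%Z.
  unfold vsub. rewrite Ha, Hb, minus_IZR. reflexivity.
Qed.

Lemma int_close_eq {d} (u v : vec d) : is_int_vec (vsub u v) -> vnorm (vsub u v) < 1 -> u = v.
Proof.
  intros H Hn. apply functional_extensionality; intros i. destruct (H i) as [z Hz].
  pose proof (coord_le (vsub u v) i) as Hc. rewrite Hz in Hc.
  assert (z = 0%Z).
  { destruct (Z.lt_trichotomy z 0) as [h|[h|h]]; auto.
    - assert (IZR z <= -1) by (apply IZR_le; lia). rewrite Rabs_left in Hc; lra.
    - assert (1 <= IZR z) by (apply IZR_le; lia). rewrite Rabs_right in Hc; lra. }
  subst. unfold vsub in Hz. lra.
Qed.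

Lemma int_increments_agree {d} (f g : vec d -> vec d) :
  vanishes0 f -> vanishes0 g -> (forall h, is_int_vec (vsub (f h) (g h))) ->
  exists r, r > 0 /\ forall h, vnorm h < r -> f h = g h.
Proof.
  intros Hf Hg Hint. pose proof (norm_const_ge1 d).
  set (c := / (2 * norm_const d)). assert (Hc : c > 0) by (unfold c; apply Rinv_0_lt_compat; lra).
  destruct (Hf c Hc) as [r1 [Hr1 K1]]. destruct (Hg c Hc) as [r2 [Hr2 K2]].
  exists (Rmin r1 r2). split; [apply Rmin_pos; lra|].
  intros h Hh. pose proof (Rmin_l r1 r2). pose proof (Rmin_r r1 r2).
  apply int_close_eq; auto.
  eapply Rle_lt_trans; [apply vnorm_sub|].
  pose proof (K1 h ltac:(lra)). pose proof (K2 h ltac:(lra)).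
  assert (norm_const d * (c + c) = 1) by (unfold c; field; lra). nra.
Qed.

Lemma deriv_periodic {d} (F : vec d -> vec d) DF n : is_C1 F DF -> descends F -> is_int_vec n ->
  forall w v, mapply (DF (vadd w n)) v = mapply (DF w) v.
Proof.
  intros [HD _] Hdesc Hn w.
  pose proof (has_derivative_tangent0 _ _ _ (HD (vadd w n))) as T1.
  pose proof (has_derivative_tangent0 _ _ _ (HD w)) as T2.
  apply (tangent0_unique (increment F w)); try (intros; apply mapply_scale); auto.
  apply (tangent0_local (increment F (vadd w n))); auto.
  apply int_increments_agree; [eapply tangent0_vanishes0, T1|eapply tangent0_vanishes0, T2|]. intros h.
  replace (vsub (increment F (vadd w n) h) (increment F w h))
    with (vsub (vsub (F (vadd (vadd w h) n)) (F (vadd w h))) (vsub (F (vadd w n)) (F w))).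
  - apply int_sub; apply Hdesc; auto.
  - unfold increment. replace (vadd (vadd w h) n) with (vadd (vadd w n) h) by vec_ring. vec_ring.
Qed.

Lemma deriv_left_inverse {d} (F G : vec d -> vec d) DF DG : is_C1 F DF -> is_C1 G DG ->
  (forall x, is_int_vec (vsub (G (F x)) x)) ->
  forall y v, mapply (DG (F y)) (mapply (DF y) v) = v.
Proof.
  intros [HF _] [HG _] Hint y v.
  set (comp := fun h => increment G (F y) (increment F y h)).
  assert (Tc : tangent0 comp (fun h => mapply (DG (F y)) (mapply (DF y) h)))
    by exact (tangent0_comp _ _ _ _ (HF y) (HG (F y))).
  assert (Tid : tangent0 (fun h : vec d => h) (fun h => h)).
  { intros eps Heps. exists 1. split; [lra|]. intros h _.
    replace (vsub h h) with (@vzero d) by vec_ring. rewrite vnorm_vzero.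
    pose proof (vnorm_nonneg h). nra. }
  symmetry.
  apply (tangent0_unique (fun h => h) (fun h => h) (fun h => mapply (DG (F y)) (mapply (DF y) h)));
    auto.
  - intros. rewrite !mapply_scale. reflexivity.
  - apply (tangent0_local comp); auto.
    apply int_increments_agree.
    + apply (vanishes0_comp (increment F y) (increment G (F y)));
        [exact (tangent0_vanishes0 _ _ (HF y))|exact (tangent0_vanishes0 _ _ (HG (F y)))].
    + intros c Hc. exists c. split; auto.
    + intros h. unfold comp, increment.
      replace (vadd (F y) (vsub (F (vadd y h)) (F y))) with (F (vadd y h)) by vec_ring.
      replace (vsub (vsub (G (F (vadd y h))) (G (F y))) h)
        with (vsub (vsub (G (F (vadd y h))) (vadd y h)) (vsub (G (F y)) y)) by vec_ring.
      apply int_sub; auto.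
Qed.

Lemma orbit_succ_nonneg {d} (F G : vec d -> vec d) x k : (0 <= k)%Z ->
  orbit F G x (k + 1)%Z = F (orbit F G x k).
Proof.
  intros Hk. unfold orbit.
  destruct (0 <=? k + 1)%Z eqn:E1; [|apply Z.leb_gt in E1; lia].
  destruct (0 <=? k)%Z eqn:E2; [|apply Z.leb_gt in E2; lia].
  replace (Z.to_nat (k + 1)) with (S (Z.to_nat k)) by lia. reflexivity.
Qed.

Lemma orbit_neg_pred {d} (F G : vec d -> vec d) x k : (k < 0)%Z ->
  orbit F G x k = G (orbit F G x (k + 1)).
Proof.
  intros Hk. unfold orbit.
  destruct (0 <=? k)%Z eqn:E2; [apply Z.leb_le in E2; lia|].
  destruct (0 <=? k + 1)%Z eqn:E1.
  - apply Z.leb_le in E1. assert (k = -1)%Z by lia. subst. reflexivity.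
  - apply Z.leb_gt in E1.
    replace (Z.to_nat (- k)) with (S (Z.to_nat (- (k + 1)))) by lia. reflexivity.
Qed.

Lemma orbit_deriv_inverse {d} (F G : vec d -> vec d) DF DG x : torus_C1_diffeo F G DF DG ->
  forall k v, mapply (DG (orbit F G x (k + 1))) (mapply (DF (orbit F G x k)) v) = v /\
              mapply (DF (orbit F G x k)) (mapply (DG (orbit F G x (k + 1))) v) = v.
Proof.
  intros [HF [HG [dF [dG [HFG HGF]]]]] k v.
  pose proof (deriv_left_inverse F G DF DG HF HG HGF) as GF.
  pose proof (deriv_left_inverse G F DG DF HG HF HFG) as FG.
  destruct (Z_le_gt_dec 0 k) as [Hk|Hk].
  - (* x_{k+1} = f(x_k); and Df(g(f y)) = Df(y) by periodicity *)
    rewrite orbit_succ_nonneg by auto. set (y := orbit F G x k). split; [apply GF|].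
    rewrite <- (deriv_periodic F DF _ HF dF (HGF y) y).
    replace (vadd y (vsub (G (F y)) y)) with (G (F y)) by vec_ring. apply FG.
  -
    rewrite (orbit_neg_pred F G x k) by lia. set (z := orbit F G x (k + 1)). split; [|apply FG].
    rewrite <- (deriv_periodic G DG _ HG dG (HFG z) z).
    replace (vadd z (vsub (F (G z)) z)) with (F (G z)) by vec_ring. apply GF.
Qed.

(** Compactness of the unit cube, in gauge form: for any positive gauge g,
    finitely many points y cover the cube by their boxes of radius g(y). *)

Lemma interval_gauge_cover (rho : R -> R) : (forall t, rho t > 0) ->
  exists T : list R, forall s, 0 <= s <= 1 -> exists t, In t T /\ Rabs (s - t) < rho t.
Proof.
  intros Hr.
  (* the supremum m of the b for which [0, b] admits a finite gauge cover is 1 *)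
  set (E := fun b => 0 <= b <= 1 /\ exists T : list R,
              forall s, 0 <= s <= b -> exists t, In t T /\ Rabs (s - t) < rho t).
  assert (E0 : E 0).
  { split; [lra|]. exists (0 :: nil). intros s Hs. exists 0. split; [left; auto|].
    replace (s - 0) with 0 by lra. rewrite Rabs_R0. apply Hr. }
  assert (Eb : bound E) by (exists 1; intros b [Hb _]; lra).
  destruct (completeness E Eb (ex_intro _ 0 E0)) as [m [Hub Hlub]].
  assert (Hm0 : 0 <= m) by (apply Hub; auto).
  assert (Hm1 : m <= 1) by (apply Hlub; intros b [Hb _]; lra).
  assert (Hb : exists b, E b /\ m - rho m < b).
  { apply Classical_Pred_Type.not_all_not_ex. intros Hn.
    assert (m <= m - rho m).
    { apply Hlub. intros b Eb'. destruct (Rle_dec b (m - rho m)); auto.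
      exfalso. apply (Hn b). split; auto; lra. }
    pose proof (Hr m). lra. }
  destruct Hb as [b [[Hb01 [T HT]] Hbm]].
  assert (Cov : forall s, 0 <= s <= m + rho m / 2 ->
                 exists t, In t (m :: T) /\ Rabs (s - t) < rho t).
  { intros s Hs. destruct (Rle_dec s b).
    - destruct (HT s ltac:(lra)) as [t [Ht1 Ht2]]. exists t; split; [right|]; auto.
    - exists m. split; [left; auto|].
      assert (b <= m) by (apply Hub; split; auto; exists T; auto).
      pose proof (Hr m). apply Rabs_def1; lra. }
  destruct (Rle_dec 1 (m + rho m / 2)).
  - exists (m :: T). intros s Hs. apply Cov. lra.
  - exfalso. assert (E (m + rho m / 2)) by (split; [pose proof (Hr m); lra|exists (m :: T); auto]).
    pose proof (Hub _ H). pose proof (Hr m). lra.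
Qed.

Definition in_cube {d} (y : vec d) : Prop := forall i, 0 <= y i <= 1.

Definition vcons {d} (t : R) (y : vec d) : vec (S d) := fun i => Fin.caseS' i (fun _ => R) t y.

(** Tube-lemma induction on the dimension: cover [0,1] by the slices [t] x cube,
    each covered with half the gauge, and refine the interval cover accordingly. *)
Lemma cube_gauge_cover (d : nat) : forall g : vec d -> R, (forall y, g y > 0) ->
  exists l : list (vec d), forall z, in_cube z ->
    exists y, In y l /\ forall i, Rabs (z i - y i) < g y.
Proof.
  induction d; intros g Hg.
  - exists (vzero :: nil). intros z _. exists vzero. split; [left; auto|]. intros i; inversion i.
  - assert (Hpos : forall t y, g (vcons t y) / 2 > 0) by (intros; pose proof (Hg (vcons t y)); lra).
    pose (slice := fun t => IHd (fun y => g (vcons t y) / 2) (Hpos t)).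
    set (Lt := fun t => proj1_sig (constructive_indefinite_description _ (slice t))).
    assert (HLt : forall t z, in_cube z ->
              exists y, In y (Lt t) /\ forall i, Rabs (z i - y i) < g (vcons t y) / 2)
      by (intros t; exact (proj2_sig (constructive_indefinite_description _ (slice t)))).
    set (rho := fun t => fold_right (fun y r => Rmin (g (vcons t y) / 2) r) 1 (Lt t)).
    assert (Hrho : forall t, rho t > 0).
    { intros t. unfold rho. induction (Lt t); simpl; [lra|]. apply Rmin_pos; [apply Hpos|auto]. }
    assert (Hrho2 : forall t y, In y (Lt t) -> rho t <= g (vcons t y) / 2).
    { intros t y. unfold rho. induction (Lt t); simpl; [tauto|]. intros [E|E].
      - subst. apply Rmin_l.
      - eapply Rle_trans; [apply Rmin_r|]. auto. }
    destruct (interval_gauge_cover rho Hrho) as [T HT].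
    exists (flat_map (fun t => map (vcons t) (Lt t)) T). intros z Hz.
    destruct (HT (z Fin.F1) (Hz Fin.F1)) as [t [Ht1 Ht2]].
    destruct (HLt t (fun i => z (Fin.FS i)) (fun i => Hz (Fin.FS i))) as [y [Hy1 Hy2]].
    exists (vcons t y). split.
    + apply in_flat_map. exists t. split; auto. apply in_map. auto.
    + pose proof (Hrho2 t y Hy1). pose proof (Hpos t y).
      intros i. pattern i. apply Fin.caseS'.
      * change (Rabs (z Fin.F1 - t) < g (vcons t y)). lra.
      * intros p. change (Rabs (z (Fin.FS p) - y p) < g (vcons t y)). specialize (Hy2 p). lra.
Qed.

Lemma cube_bounded {d} (Phi : vec d -> R) :
  (forall y, exists delta, delta > 0 /\
     exists M, forall z, (forall i, Rabs (z i - y i) < delta) -> Phi z <= M) ->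
  exists M, forall z, in_cube z -> Phi z <= M.
Proof.
  intros H.
  assert (H' : forall y, exists p : R * R, fst p > 0 /\
                 forall z, (forall i, Rabs (z i - y i) < fst p) -> Phi z <= snd p).
  { intros y. destruct (H y) as [de [Hde [M HM]]]. exists (de, M). auto. }
  set (P := fun y => proj1_sig (constructive_indefinite_description _ (H' y))).
  assert (HP : forall y, fst (P y) > 0 /\
                 forall z, (forall i, Rabs (z i - y i) < fst (P y)) -> Phi z <= snd (P y))
    by (intros y; exact (proj2_sig (constructive_indefinite_description _ (H' y)))).
  destruct (cube_gauge_cover d (fun y => fst (P y)) (fun y => proj1 (HP y))) as [l Hl].
  exists (fold_right (fun y r => Rmax (snd (P y)) r) 0 l). intros z Hz.
  destruct (Hl z Hz) as [y [Hy1 Hy2]]. apply Rle_trans with (snd (P y)); [apply (proj2 (HP y)); auto|].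
  clear Hl Hy2. induction l; simpl in *; [tauto|]. destruct Hy1 as [E|E].
  - subst. apply Rmax_l.
  - eapply Rle_trans; [apply IHl; auto|apply Rmax_r].
Qed.

Lemma fin_uniform_delta {d} (P : Fin.t d -> R -> Prop) :
  (forall i, exists delta, delta > 0 /\ P i delta) ->
  (forall i a b, 0 < a <= b -> P i b -> P i a) ->
  exists delta, delta > 0 /\ forall i, P i delta.
Proof.
  revert P; induction d; intros P H Hmono.
  - exists 1. split; [lra|]. intros i; inversion i.
  - destruct (IHd (fun i => P (Fin.FS i))) as [d1 [Hd1 H1]];
      [intros i; apply H|intros i a b; apply Hmono|].
    destruct (H Fin.F1) as [d0 [Hd0 H0]]. exists (Rmin d0 d1). split; [apply Rmin_pos; auto|].
    intros i. pattern i. apply Fin.caseS'.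
    + apply Hmono with d0; auto. split; [apply Rmin_pos; auto|apply Rmin_l].
    + intros p. apply Hmono with d1; auto. split; [apply Rmin_pos; auto|apply Rmin_r].
Qed.

Lemma deriv_locally_bounded {d} (F : vec d -> vec d) DF : is_C1 F DF ->
  forall y, exists delta, delta > 0 /\
    exists M, forall z, (forall i, Rabs (z i - y i) < delta) -> mnorm (DF z) <= M.
Proof.
  intros [_ Hcont] y.
  destruct (fin_uniform_delta (fun i de => forall j z, vnorm (vsub z y) < de ->
                                   Rabs (DF z i j - DF y i j) < 1)) as [de [Hde Hdz]].
  - intros i. apply (fin_uniform_delta (fun j de => forall z, vnorm (vsub z y) < de ->
                                           Rabs (DF z i j - DF y i j) < 1)).
    + intros j. apply (Hcont y i j 1 ltac:(lra)).
    + intros j a b Hab Hb z Hz. apply Hb. lra.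
  - intros i a b Hab Hb j z Hz. apply Hb. lra.
  - pose proof (norm_const_ge1 d). pose proof (pos_INR d).
    exists (de / norm_const d). split; [apply Rdiv_lt_0_compat; lra|].
    exists (mnorm (DF y) + INR d * INR d). intros z Hz.
    assert (Hn : vnorm (vsub z y) < de).
    { eapply Rle_lt_trans; [apply (vnorm_le_coords _ (de / norm_const d))|].
      - intros i. left. apply Hz.
      - unfold norm_const in *.
        replace (INR d * (de / (INR d + 1))) with (de - de / (INR d + 1)) by (field; lra).
        assert (0 < de / (INR d + 1)) by (apply Rdiv_lt_0_compat; lra). lra. }
    unfold mnorm. rewrite <- fsum_const, <- fsum_plus. apply fsum_le. intros i.
    rewrite <- (Rmult_1_r (INR d)), <- fsum_const, <- fsum_plus. apply fsum_le. intros j.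
    pose proof (Hdz i j z Hn). pose proof (Rabs_triang_inv (DF z i j) (DF y i j)). lra.
Qed.

(** The derivative of a torus map is bounded: it is periodic and bounded on the cube. *)
Lemma deriv_bounded {d} (F : vec d -> vec d) DF : is_C1 F DF -> descends F ->
  exists K, 0 <= K /\ forall y, mnorm (DF y) <= K.
Proof.
  intros HC Hdesc.
  destruct (cube_bounded _ (deriv_locally_bounded F DF HC)) as [M HM].
  exists (Rmax M 0). split; [apply Rmax_r|]. intros y.
  set (n := fun i => IZR (Int_part (y i))). set (f := vsub y n).
  assert (Hn : is_int_vec n) by (intros i; exists (Int_part (y i)); reflexivity).
  assert (Hf : in_cube f) by (intros i; unfold f, vsub, n; pose proof (base_Int_part (y i)); lra).
  assert (E : y = vadd f n) by (unfold f; vec_ring).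
  replace (mnorm (DF y)) with (mnorm (DF f)).
  - eapply Rle_trans; [apply HM; auto|apply Rmax_l].
  - unfold mnorm. rewrite E. apply fsum_ext; intros i; apply fsum_ext; intros j.
    rewrite (mat_ext _ _ (deriv_periodic F DF n HC Hdesc Hn f)). reflexivity.
Qed.

Lemma absZ_nonneg k : 0 <= absZ k.
Proof. unfold absZ. apply IZR_le. lia. Qed.

Lemma absZ_sub k (j : nat) : absZ (k - Z.of_nat j) <= absZ k + INR j.
Proof. unfold absZ. rewrite INR_IZR_INZ, <- plus_IZR. apply IZR_le. lia. Qed.

Lemma absZ_add k (j : nat) : absZ (k + Z.of_nat j) <= absZ k + INR j.
Proof. unfold absZ. rewrite INR_IZR_INZ, <- plus_IZR. apply IZR_le. lia. Qed.

Lemma exp_mono_le a b : a <= b -> exp a <= exp b.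
Proof. intros [H|H]; [left; apply exp_increasing; auto|subst; lra]. Qed.

Lemma exp_ge_lin y : 0 <= y -> 1 + y <= exp y.
Proof.
  intros. destruct (Req_dec y 0); [subst; rewrite exp_0; lra|].
  left. apply exp_ineq1; auto.
Qed.

Lemma exp_weight_ge1 a k : 0 <= a -> 1 <= exp (a * absZ k).
Proof. intros Ha. pose proof (exp_ge_lin (a * absZ k)). pose proof (absZ_nonneg k). nra. Qed.

Lemma weight_shift b k (j : nat) kj : 0 <= b -> absZ kj <= absZ k + INR j ->
  exp (b * absZ kj) <= exp b ^ j * exp (b * absZ k).
Proof.
  intros Hb H.
  assert (Hpow : exp (b * INR j) = exp b ^ j).
  { clear H. induction j as [|j IH]; simpl; [rewrite Rmult_0_r, exp_0; ring|].
    rewrite <- IH, <- exp_plus. f_equal. destruct j; simpl; ring. }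
  rewrite <- Hpow, <- exp_plus. apply exp_mono_le. nra.
Qed.

Lemma contraction_margin lam : 0 < lam < 1 -> exists T, T > 0 /\ lam * exp T < 1.
Proof.
  intros H. assert (Hinv : 1 < / lam) by (rewrite <- Rinv_1; apply Rinv_lt_contravar; lra).
  assert (Hln : 0 < ln (/ lam)) by (rewrite <- ln_1; apply ln_increasing; lra).
  exists (ln (/ lam) / 2). split; [lra|].
  assert (exp (ln (/ lam) / 2) < / lam) by (rewrite <- (exp_ln (/ lam)) at 2 by lra;
    apply exp_increasing; lra).
  apply Rmult_lt_compat_l with (r := lam) in H0; [|lra]. rewrite Rinv_r in H0 by lra. lra.
Qed.

Fixpoint rsum (f : nat -> R) (n : nat) : R := match n with O => 0 | S n' => rsum f n' + f n' end.

Fixpoint vsum {d} (w : nat -> vec d) (n : nat) : vec d :=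
  match n with O => vzero | S n' => vadd (vsum w n') (w n') end.

Lemma rsum_geom_le q n : 0 <= q < 1 -> rsum (fun j => q ^ j) n <= / (1 - q).
Proof.
  intros Hq. assert (E : rsum (fun j => q ^ j) n = (1 - q ^ n) / (1 - q)).
  { induction n; simpl; [field; lra|]. rewrite IHn. field; lra. }
  rewrite E. pose proof (pow_le q n ltac:(lra)). unfold Rdiv.
  assert (0 < / (1 - q)) by (apply Rinv_0_lt_compat; lra). nra.
Qed.

Lemma rsum_scal c f n : rsum (fun j => c * f j) n = c * rsum f n.
Proof. induction n; simpl; [ring|]. rewrite IHn; ring. Qed.

Lemma vsum_bound {d} (w : nat -> vec d) K q n : 0 <= q < 1 ->
  (forall j, vnorm (w j) <= K * q ^ j) -> vnorm (vsum w n) <= INR d * (K * / (1 - q)).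
Proof.
  intros Hq H. pose proof (pos_INR d).
  assert (HK : 0 <= K) by (pose proof (H 0%nat); pose proof (vnorm_nonneg (w 0%nat)); simpl in *; lra).
  eapply Rle_trans; [apply vnorm_le_l1|].
  assert (l1 (vsum w n) <= rsum (fun j => INR d * (K * q ^ j)) n).
  { induction n; simpl; [rewrite l1_vzero; lra|].
    eapply Rle_trans; [apply l1_add|]. pose proof (l1_le_vnorm (w n)). pose proof (H n).
    assert (INR d * vnorm (w n) <= INR d * (K * q ^ n)) by (apply Rmult_le_compat_l; auto). lra. }
  eapply Rle_trans; [eassumption|]. rewrite (rsum_scal (INR d)), rsum_scal.
  apply Rmult_le_compat_l; auto. apply Rmult_le_compat_l; auto. apply rsum_geom_le; auto.
Qed.

Lemma le_of_geometric_slack s T R q : 0 <= q < 1 -> 0 <= R -> (forall J, s <= T + R * q ^ J) -> s <= T.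
Proof.
  intros Hq HR H. destruct (Rle_dec s T) as [|Hlt]; auto. exfalso.
  destruct (pow_lt_1_zero q ltac:(rewrite Rabs_right; lra) ((s - T) / (R + 1))) as [N HN];
    [apply Rdiv_lt_0_compat; lra|].
  specialize (HN N (le_n N)). specialize (H N).
  rewrite Rabs_right in HN by (apply Rle_ge, pow_le; lra).
  pose proof (pow_le q N ltac:(lra)).
  apply Rmult_lt_compat_l with (r := R + 1) in HN; [|lra].
  replace ((R + 1) * ((s - T) / (R + 1))) with (s - T) in HN by (field; lra).
  nra.
Qed.

Definition vseries {d} (w : nat -> vec d) : vec d := fun i => Series (fun j => w j i).

Lemma geom_series K q : 0 <= q < 1 ->
  ex_series (fun j => K * q ^ j) /\ Series (fun j => K * q ^ j) = K * / (1 - q).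
Proof.
  intros Hq. pose proof (is_series_geom q ltac:(rewrite Rabs_right; lra)) as Hg. split.
  - eexists. exact (is_series_scal_l K _ _ Hg).
  - rewrite Series_scal_l. f_equal. apply is_series_unique; auto.
Qed.

Lemma vseries_ex {d} (w : nat -> vec d) K q : 0 <= q < 1 -> (forall j, vnorm (w j) <= K * q ^ j) ->
  forall i, ex_series (fun j => Rabs (w j i)) /\ ex_series (fun j => w j i).
Proof.
  intros Hq H i. destruct (geom_series K q Hq) as [Hex _].
  assert (E : ex_series (fun j => Rabs (w j i))).
  { apply (ex_series_le (fun j => Rabs (w j i)) (fun j => K * q ^ j)); auto.
    intros n. change (norm (Rabs (w n i))) with (Rabs (Rabs (w n i))). rewrite Rabs_Rabsolu.
    eapply Rle_trans; [apply coord_le|apply H]. }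
  split; auto. apply ex_series_Rabs; auto.
Qed.

Lemma vseries_bound {d} (w : nat -> vec d) K q : 0 <= q < 1 -> (forall j, vnorm (w j) <= K * q ^ j) ->
  vnorm (vseries w) <= INR d * (K * / (1 - q)).
Proof.
  intros Hq H. apply vnorm_le_coords. intros i. unfold vseries.
  destruct (vseries_ex w K q Hq H i) as [E1 E2]. destruct (geom_series K q Hq) as [G1 G2].
  eapply Rle_trans; [apply Series_Rabs; auto|]. rewrite <- G2. apply Series_le; auto.
  intros n. split; [apply Rabs_pos|]. eapply Rle_trans; [apply coord_le|apply H].
Qed.

Lemma vseries_ext {d} (w w' : nat -> vec d) : (forall j, w j = w' j) -> vseries w = vseries w'.
Proof. intros H. f_equal. apply functional_extensionality; auto. Qed.

Lemma vseries_shift {d} (w : nat -> vec d) : (forall i, ex_series (fun j => w j i)) ->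
  vseries w = vadd (w 0%nat) (vseries (fun j => w (S j))).
Proof. intros H. apply functional_extensionality; intros i. apply Series_incr_1. auto. Qed.

Lemma fsum_Series {d} (f : Fin.t d -> nat -> R) : (forall i, ex_series (f i)) ->
  ex_series (fun n => fsum (fun i => f i n)) /\
  fsum (fun i => Series (f i)) = Series (fun n => fsum (fun i => f i n)).
Proof.
  induction d; intros H; simpl.
  - destruct (geom_series 0 0 ltac:(lra)) as [G1 G2]. split.
    + eapply ex_series_ext; [|apply G1]. intros n; simpl; ring.
    + rewrite (Series_ext _ (fun j => 0 * 0 ^ j)) by (intros; ring). rewrite G2. ring.
  - destruct (IHd (fun i => f (Fin.FS i)) (fun i => H (Fin.FS i))) as [E1 E2]. split.
    + destruct (H Fin.F1) as [l1' H1], E1 as [l2 H2]. eexists. exact (is_series_plus _ _ _ _ H1 H2).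
    + rewrite E2, Series_plus; auto.
Qed.

Lemma mapply_vseries {d} (A : mat d) (w : nat -> vec d) : (forall i, ex_series (fun j => w j i)) ->
  mapply A (vseries w) = vseries (fun j => mapply A (w j)).
Proof.
  intros H. apply functional_extensionality; intros i. unfold mapply, vseries.
  rewrite (fsum_ext _ (fun j' => Series (fun n => A i j' * w n j'))) by (intros; rewrite Series_scal_l; auto).
  apply fsum_Series. intros j'. destruct (H j') as [l Hl]. eexists. exact (is_series_scal_l (A i j') _ _ Hl).
Qed.

Definition weighted_bound {d} (eta : seqR d) (M a : R) : Prop :=
  forall k, vnorm (eta k) <= M * exp (a * absZ k).

Lemma inN_weighted {d} (eta : seqR d) : inN eta -> forall a, a > 0 ->
  exists M, 0 <= M /\ weighted_bound eta M a.
Proof.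
  intros H a Ha. destruct (H a Ha) as [K HK].
  assert (Hfin : forall N : nat, exists C, forall k, (Z.abs k <= Z.of_nat N)%Z -> vnorm (eta k) <= C).
  { induction N as [|N [C HC]].
    - exists (vnorm (eta 0%Z)). intros k Hk. replace k with 0%Z by lia. lra.
    - exists (Rmax C (Rmax (vnorm (eta (Z.of_nat (S N)))) (vnorm (eta (- Z.of_nat (S N))%Z)))).
      intros k Hk. destruct (Z_le_gt_dec (Z.abs k) (Z.of_nat N)).
      + eapply Rle_trans; [apply HC; auto|apply Rmax_l].
      + eapply Rle_trans; [|apply Rmax_r].
        assert (k = Z.of_nat (S N) \/ k = (- Z.of_nat (S N))%Z) as [E|E] by lia; subst;
          [apply Rmax_l|apply Rmax_r]. }
  destruct (Hfin (Z.to_nat K)) as [C HC].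
  exists (Rmax 1 C). split; [pose proof (Rmax_l 1 C); lra|]. intros k.
  pose proof (exp_weight_ge1 a k ltac:(lra)). pose proof (Rmax_l 1 C). pose proof (Rmax_r 1 C).
  destruct (Z_le_gt_dec K (Z.abs k)).
  - eapply Rle_trans; [apply HK; auto|]. nra.
  - assert (vnorm (eta k) <= C) by (apply HC; lia). pose proof (vnorm_nonneg (eta k)). nra.
Qed.

Lemma inN_of_weighted {d} (xi : seqR d) :
  (forall delta, delta > 0 -> exists C b, 0 <= b < delta /\ weighted_bound xi C b) -> inN xi.
Proof.
  intros H delta Hd. destruct (H delta Hd) as [C [b [Hb HC]]].
  exists (up (Rabs C / (delta - b))). intros k Hk.
  destruct (archimed (Rabs C / (delta - b))) as [Hup _].
  assert (Ht : Rabs C / (delta - b) < absZ k)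
    by (apply Rlt_le_trans with (IZR (up (Rabs C / (delta - b)))); auto; apply IZR_le; auto).
  assert (Rabs C < (delta - b) * absZ k).
  { apply Rmult_lt_compat_l with (r := delta - b) in Ht; [|lra].
    replace ((delta - b) * (Rabs C / (delta - b))) with (Rabs C) in Ht by (field; lra). auto. }
  pose proof (exp_ge_lin ((delta - b) * absZ k) ltac:(pose proof (absZ_nonneg k); nra)).
  replace (delta * absZ k) with ((delta - b) * absZ k + b * absZ k) by ring. rewrite exp_plus.
  pose proof (exp_pos (b * absZ k)). pose proof (Rle_abs C). pose proof (HC k). nra.
Qed.

Lemma inN_sub {d} (a b : seqR d) : inN a -> inN b -> inN (seqsub a b).
Proof.
  intros Ha Hb. apply inN_of_weighted. intros delta Hd.
  destruct (inN_weighted a Ha (delta / 2) ltac:(lra)) as [M1 [H1 B1]].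
  destruct (inN_weighted b Hb (delta / 2) ltac:(lra)) as [M2 [H2 B2]].
  exists (norm_const d * (M1 + M2)), (delta / 2). split; [lra|]. intros k. unfold seqsub.
  eapply Rle_trans; [apply vnorm_sub|]. pose proof (B1 k). pose proof (B2 k).
  pose proof (norm_const_ge1 d). nra.
Qed.

Lemma normN_lt_weighted {d} n (theta : seqR d) r : normN_lt n theta r ->
  exists r', 0 <= r' < r /\ weighted_bound theta r' (/ INR n).
Proof.
  intros [r' [Hr' Hb]]. exists r'.
  assert (Hk : forall k, vnorm (theta k) = exp (- (absZ k / INR n)) * vnorm (theta k) * exp (/ INR n * absZ k)).
  { intros k. replace (/ INR n * absZ k) with (absZ k / INR n) by (unfold Rdiv; ring).
    rewrite Rmult_comm, <- Rmult_assoc, <- exp_plus, Rplus_opp_r, exp_0. ring. }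
  split; [split; auto|].
  - pose proof (Hb 0%Z). pose proof (exp_pos (- (absZ 0 / INR n))). pose proof (vnorm_nonneg (theta 0%Z)). nra.
  - intros k. rewrite Hk. apply Rmult_le_compat_r; [left; apply exp_pos|apply Hb].
Qed.

Lemma weighted_normN_lt {d} n (xi : seqR d) M r : weighted_bound xi M (/ INR n) -> M < r -> normN_lt n xi r.
Proof.
  intros Hb HM. exists M. split; auto. intros k.
  replace M with (exp (- (absZ k / INR n)) * (M * exp (/ INR n * absZ k))).
  - apply Rmult_le_compat_l; [left; apply exp_pos|apply Hb].
  - replace (/ INR n * absZ k) with (absZ k / INR n) by (unfold Rdiv; ring).
    rewrite Rmult_comm, Rmult_assoc, <- exp_plus, Rplus_opp_r, exp_0. ring.
Qed.

Lemma nat_inv_below a : a > 0 -> exists n : nat, (0 < n)%nat /\ / INR n <= a.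
Proof.
  intros Ha. destruct (archimed (/ a)) as [Hup _].
  assert (Hia : 0 < / a) by (apply Rinv_0_lt_compat; lra).
  exists (Z.to_nat (up (/ a))).
  assert (Hpos : (0 < up (/ a))%Z) by (apply lt_IZR; lra).
  split; [lia|]. rewrite INR_IZR_INZ, Z2Nat.id by lia.
  apply Rle_trans with (/ / a); [apply Rinv_le_contravar; lra|rewrite Rinv_inv; lra].
Qed.

Section GreenOperator.

Variable d : nat.
Variables (DF DG : vec d -> mat d) (X : Z -> vec d).

Hypothesis inverse_along : forall k v,
  mapply (DG (X (k + 1)%Z)) (mapply (DF (X k)) v) = v /\
  mapply (DF (X k)) (mapply (DG (X (k + 1)%Z)) v) = v.

Variables (lam : R) (Es Eu : Z -> vec d -> Prop) (eps0 : R).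
Hypothesis lam_range : 0 < lam < 1.
Hypothesis splitting : forall k, is_subspace (Es k) /\ is_subspace (Eu k) /\
  (forall v, exists vs vu, Es k vs /\ Eu k vu /\ v = vadd vs vu) /\
  (forall v, Es k v -> Eu k v -> v = vzero).
Hypothesis Es_invariant : forall k v, Es k v -> Es (k + 1)%Z (mapply (DF (X k)) v).
Hypothesis Eu_invariant : forall k v, Eu k v -> Eu (k + 1)%Z (mapply (DF (X k)) v).
Hypothesis eps0_pos : eps0 > 0.
Hypothesis tempered_rates : forall eps, 0 < eps < eps0 -> exists c : R,
  (forall k (j : nat) v, (0 < j)%nat -> Es k v ->
     vnorm (Dfpow DF X j k v) <= c * lam ^ j * exp (eps * absZ k) * vnorm v) /\
  (forall k (j : nat) v, (0 < j)%nat -> Eu k v ->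
     vnorm (Dfinvpow DG X j k v) <= c * lam ^ j * exp (eps * absZ k) * vnorm v) /\
  (forall k v vs vu, Es k vs -> Eu k vu -> v = vadd vs vu ->
     vnorm vs <= c * exp (eps * absZ k) * vnorm v /\
     vnorm vu <= c * exp (eps * absZ k) * vnorm v).

Local Notation Gam := (Gamma DF X).

Lemma subspace_sub (E : vec d -> Prop) : is_subspace E -> forall u v, E u -> E v -> E (vsub u v).
Proof.
  intros [H0 [Ha Hs]] u v Hu Hv.
  replace (vsub u v) with (vadd u (vscale (-1) v)) by vec_ring. auto.
Qed.

Lemma stable_part_exists k v : exists vs, Es k vs /\ Eu k (vsub v vs).
Proof.
  destruct (splitting k) as [_ [_ [Hs _]]]. destruct (Hs v) as [vs [vu [H1 [H2 H3]]]].
  exists vs. split; auto. replace (vsub v vs) with vu; auto. subst. vec_ring.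
Qed.

Definition ps k v : vec d := proj1_sig (constructive_indefinite_description _ (stable_part_exists k v)).
Definition pu k v : vec d := vsub v (ps k v).

Lemma ps_in k v : Es k (ps k v).
Proof. exact (proj1 (proj2_sig (constructive_indefinite_description _ (stable_part_exists k v)))). Qed.

Lemma pu_in k v : Eu k (pu k v).
Proof. exact (proj2 (proj2_sig (constructive_indefinite_description _ (stable_part_exists k v)))). Qed.

Lemma ps_pu k v : v = vadd (ps k v) (pu k v).
Proof. unfold pu. vec_ring. Qed.

(** The decomposition is unique since E^s_k and E^u_k meet only in 0. *)
Lemma proj_of_sum k a b : Es k a -> Eu k b -> ps k (vadd a b) = a /\ pu k (vadd a b) = b.
Proof.
  intros Ha Hb. destruct (splitting k) as [Ss [Su [_ Hz]]].
  set (v := vadd a b).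
  assert (Z1 : vsub a (ps k v) = vzero).
  { apply Hz; [apply subspace_sub; auto; apply ps_in|].
    replace (vsub a (ps k v)) with (vsub (pu k v) b) by (unfold pu, v; vec_ring).
    apply subspace_sub; auto. apply pu_in. }
  assert (E : ps k v = a).
  { apply functional_extensionality; intros i. assert (Hi := f_equal (fun z => z i) Z1).
    unfold vsub, vzero in Hi. simpl in Hi. lra. }
  split; auto. unfold pu. rewrite E. unfold v. vec_ring.
Qed.

Lemma Dfpow_add j k u v : Dfpow DF X j k (vadd u v) = vadd (Dfpow DF X j k u) (Dfpow DF X j k v).
Proof. induction j; simpl; auto. rewrite IHj, mapply_add. auto. Qed.

Lemma Dfinvpow_sub j k u v :
  Dfinvpow DG X j k (vsub u v) = vsub (Dfinvpow DG X j k u) (Dfinvpow DG X j k v).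
Proof. induction j; simpl; auto. rewrite IHj, mapply_sub. auto. Qed.

Lemma Dfpow_shift j m v : Dfpow DF X j (m + 1) (mapply (DF (X m)) v) = Dfpow DF X (S j) m v.
Proof.
  induction j; simpl in *; [replace (m + 0)%Z with m by lia; auto|].
  rewrite IHj. replace (m + 1 + Z.of_nat j)%Z with (m + Z.pos (Pos.of_succ_nat j))%Z by lia. auto.
Qed.

Lemma Dfinvpow_shift j m v :
  Dfinvpow DG X j m (mapply (DG (X (m + 1)%Z)) v) = Dfinvpow DG X (S j) (m + 1) v.
Proof.
  induction j; simpl in *; [replace (m + 1 - 0)%Z with (m + 1)%Z by lia; auto|].
  rewrite IHj. replace (m - Z.of_nat j)%Z with (m + 1 - Z.pos (Pos.of_succ_nat j))%Z by lia. auto.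
Qed.

(** For a fixed eps, one constant C >= 1 controls the cocycle (including the
    trivial case j = 0) and both projections. *)
Definition hyp_constant (eps C : R) : Prop :=
  1 <= C /\
  (forall k j v, Es k v -> vnorm (Dfpow DF X j k v) <= C * lam ^ j * exp (eps * absZ k) * vnorm v) /\
  (forall k j v, Eu k v -> vnorm (Dfinvpow DG X j k v) <= C * lam ^ j * exp (eps * absZ k) * vnorm v) /\
  (forall k v, vnorm (ps k v) <= C * exp (eps * absZ k) * vnorm v) /\
  (forall k v, vnorm (pu k v) <= C * exp (eps * absZ k) * vnorm v).

Lemma hyp_constant_exists eps : 0 < eps < eps0 -> exists C, hyp_constant eps C.
Proof.
  intros He. destruct (tempered_rates eps He) as [c [H1 [H2 H3]]]. exists (Rmax c 1).
  pose proof (Rmax_l c 1). pose proof (Rmax_r c 1).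
  assert (Hx : forall k, 1 <= exp (eps * absZ k)) by (intros; apply exp_weight_ge1; lra).
  assert (Hpow : forall (P : Z -> vec d -> Prop) (T : nat -> Z -> vec d -> vec d),
            (forall k v, T 0%nat k v = v) ->
            (forall k j v, (0 < j)%nat -> P k v ->
               vnorm (T j k v) <= c * lam ^ j * exp (eps * absZ k) * vnorm v) ->
            forall k j v, P k v ->
               vnorm (T j k v) <= Rmax c 1 * lam ^ j * exp (eps * absZ k) * vnorm v).
  { intros P T T0 HT k j v Hv. pose proof (Hx k). pose proof (vnorm_nonneg v).
    destruct j as [|j].
    - rewrite T0. simpl.
      assert (1 <= Rmax c 1 * exp (eps * absZ k)) by nra. nra.
    - eapply Rle_trans; [apply HT; auto; lia|]. pose proof (pow_le lam (S j) ltac:(lra)).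
      apply Rmult_le_compat_r; auto. apply Rmult_le_compat_r; [lra|].
      apply Rmult_le_compat_r; auto. }
  assert (Hproj : forall k (v w : vec d), vnorm w <= c * exp (eps * absZ k) * vnorm v ->
                    vnorm w <= Rmax c 1 * exp (eps * absZ k) * vnorm v).
  { intros k v w Hw. eapply Rle_trans; [apply Hw|]. pose proof (Hx k). pose proof (vnorm_nonneg v).
    apply Rmult_le_compat_r; auto. apply Rmult_le_compat_r; lra. }
  split; [auto|]. split; [|split; [|split]]; intros k.
  - apply (Hpow Es (Dfpow DF X)); auto.
  - apply (Hpow Eu (Dfinvpow DG X)); auto.
  - intros v. apply Hproj. exact (proj1 (H3 k v _ _ (ps_in k v) (pu_in k v) (ps_pu k v))).
  - intros v. apply Hproj. exact (proj2 (H3 k v _ _ (ps_in k v) (pu_in k v) (ps_pu k v))).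
Qed.


(** Admissible exponents: eps for the tempered constants and a for the growth
    of the data, with the combined ratio lambda e^{2 eps + a} < 1.  They can be
    chosen with 2 eps + a as small as desired. *)
Definition admissible (eps a : R) : Prop :=
  0 < eps < eps0 /\ 0 < a /\ lam * exp (2 * eps + a) < 1.

Lemma admissible_exists b : b > 0 -> exists eps a, admissible eps a /\ 2 * eps + a <= b.
Proof.
  intros Hb. destruct (contraction_margin lam lam_range) as [T [HT HlT]].
  set (e := Rmin (eps0 / 2) (Rmin (b / 4) (T / 4))).
  pose proof (Rmin_l (eps0 / 2) (Rmin (b / 4) (T / 4))).
  pose proof (Rmin_r (eps0 / 2) (Rmin (b / 4) (T / 4))).
  pose proof (Rmin_l (b / 4) (T / 4)). pose proof (Rmin_r (b / 4) (T / 4)). fold e in H, H0.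
  assert (He : 0 < e) by (unfold e; repeat apply Rmin_pos; lra).
  exists e, e. split; [split; [lra|split; [lra|]]|lra].
  eapply Rle_lt_trans; [|apply HlT]. apply Rmult_le_compat_l; [lra|]. apply exp_mono_le. lra.
Qed.

Definition stable_term (eta : seqR d) k (j : nat) : vec d :=
  Dfpow DF X j (k - Z.of_nat j) (ps (k - Z.of_nat j) (eta (k - Z.of_nat j)%Z)).
Definition unstable_term (eta : seqR d) k (j : nat) : vec d :=
  Dfinvpow DG X j (k + Z.of_nat j) (pu (k + Z.of_nat j) (eta (k + Z.of_nat j)%Z)).

Definition green (eta : seqR d) : seqR d :=
  fun k => vsub (vseries (stable_term eta k)) (vseries (fun j => unstable_term eta k (S j))).

Lemma weighted_bound_nonneg (eta : seqR d) M a : weighted_bound eta M a -> 0 <= M.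
Proof.
  intros H. pose proof (H 0%Z). pose proof (vnorm_nonneg (eta 0%Z)).
  unfold absZ in *. simpl in *. rewrite Rmult_0_r, exp_0 in *. lra.
Qed.

Lemma term_bound eps C a M (eta : seqR d) m k (j : nat) (t w : vec d) L :
  hyp_constant eps C -> 0 <= eps -> 0 <= a -> 0 <= L -> weighted_bound eta M a ->
  absZ m <= absZ k + INR j ->
  vnorm t <= C * L * exp (eps * absZ m) * vnorm w ->
  vnorm w <= C * exp (eps * absZ m) * vnorm (eta m) ->
  vnorm t <= C * C * M * exp ((2 * eps + a) * absZ k) * (L * exp (2 * eps + a) ^ j).
Proof.
  intros [HC1 _] He Ha HL Heta Hm Ht Hw.
  pose proof (weighted_bound_nonneg eta M a Heta) as HM.
  pose proof (exp_pos (eps * absZ m)) as E1.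
  assert (Hcl : 0 <= C * L * exp (eps * absZ m)) by (apply Rmult_le_pos; [nra|lra]).
  assert (Hc : 0 <= C * exp (eps * absZ m)) by nra.
  eapply Rle_trans; [apply Ht|].
  eapply Rle_trans; [apply Rmult_le_compat_l; [exact Hcl|apply Hw]|].
  eapply Rle_trans.
  { apply Rmult_le_compat_l; [exact Hcl|]. apply Rmult_le_compat_l; [exact Hc|apply Heta]. }
  assert (Eb : exp ((2 * eps + a) * absZ m) = exp (eps * absZ m) * exp (eps * absZ m) * exp (a * absZ m))
    by (rewrite <- !exp_plus; f_equal; ring).
  replace (C * L * exp (eps * absZ m) * (C * exp (eps * absZ m) * (M * exp (a * absZ m))))
    with (C * C * M * L * exp ((2 * eps + a) * absZ m)) by (rewrite Eb; ring).
  replace (C * C * M * exp ((2 * eps + a) * absZ k) * (L * exp (2 * eps + a) ^ j))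
    with (C * C * M * L * (exp (2 * eps + a) ^ j * exp ((2 * eps + a) * absZ k))) by ring.
  apply Rmult_le_compat_l; [repeat apply Rmult_le_pos; lra|].
  apply weight_shift; auto. lra.
Qed.

Lemma stable_term_bound eps C a M (eta : seqR d) : hyp_constant eps C -> 0 <= eps -> 0 <= a ->
  weighted_bound eta M a -> forall k j,
  vnorm (stable_term eta k j) <= C * C * M * exp ((2 * eps + a) * absZ k) * (lam * exp (2 * eps + a)) ^ j.
Proof.
  intros HC He Ha Heta k j. rewrite Rpow_mult_distr.
  pose proof HC as [_ [Hs [_ [Hps _]]]].
  apply (term_bound eps C a M eta (k - Z.of_nat j)%Z k j _ (ps (k - Z.of_nat j) (eta (k - Z.of_nat j)%Z)));
    auto using absZ_sub.
  - apply pow_le; lra.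
  - apply Hs, ps_in.
Qed.

Lemma unstable_term_bound eps C a M (eta : seqR d) : hyp_constant eps C -> 0 <= eps -> 0 <= a ->
  weighted_bound eta M a -> forall k j,
  vnorm (unstable_term eta k j) <= C * C * M * exp ((2 * eps + a) * absZ k) * (lam * exp (2 * eps + a)) ^ j.
Proof.
  intros HC He Ha Heta k j. rewrite Rpow_mult_distr.
  pose proof HC as [_ [_ [Hu [_ Hpu]]]].
  apply (term_bound eps C a M eta (k + Z.of_nat j)%Z k j _ (pu (k + Z.of_nat j) (eta (k + Z.of_nat j)%Z)));
    auto using absZ_add.
  - apply pow_le; lra.
  - apply Hu, pu_in.
Qed.

Lemma unstable_term_bound_succ eps C a M (eta : seqR d) : hyp_constant eps C -> 0 <= eps -> 0 <= a ->
  lam * exp (2 * eps + a) <= 1 -> weighted_bound eta M a -> forall k j,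
  vnorm (unstable_term eta k (S j)) <= C * C * M * exp ((2 * eps + a) * absZ k) * (lam * exp (2 * eps + a)) ^ j.
Proof.
  intros HC He Ha Hq Heta k j.
  eapply Rle_trans; [apply (unstable_term_bound eps C a M); auto|].
  pose proof HC as [HC1 _]. pose proof (weighted_bound_nonneg eta M a Heta).
  pose proof (exp_pos ((2 * eps + a) * absZ k)). pose proof (exp_pos (2 * eps + a)).
  assert (Hq0 : 0 <= lam * exp (2 * eps + a)) by nra.
  apply Rmult_le_compat_l; [repeat apply Rmult_le_pos; nra|].
  simpl. pose proof (pow_le _ j Hq0). nra.
Qed.

Definition rate (eps a : R) : R := lam * exp (2 * eps + a).

Lemma rate_range eps a : admissible eps a -> 0 <= rate eps a < 1.
Proof. intros [_ [_ Hq]]. unfold rate. pose proof (exp_pos (2 * eps + a)). split; [nra|exact Hq]. Qed.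

Definition green_const (eps a C : R) : R :=
  norm_const d * (2 * (norm_const d * (INR d * (C * C * / (1 - rate eps a))))).

Lemma green_const_nonneg eps a C : admissible eps a -> hyp_constant eps C -> 0 <= green_const eps a C.
Proof.
  intros Hadm [HC _]. pose proof (rate_range eps a Hadm). pose proof (norm_const_ge1 d).
  pose proof (pos_INR d). assert (0 < / (1 - rate eps a)) by (apply Rinv_0_lt_compat; lra).
  unfold green_const. repeat apply Rmult_le_pos; lra.
Qed.

Lemma green_bound eps a C M (eta : seqR d) : admissible eps a -> hyp_constant eps C ->
  weighted_bound eta M a -> weighted_bound (green eta) (green_const eps a C * M) (2 * eps + a).
Proof.
  intros Hadm HC Heta k. pose proof (rate_range eps a Hadm) as Hq.
  pose proof Hadm as [He [Ha _]]. pose proof (norm_const_ge1 d).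
  set (K := C * C * M * exp ((2 * eps + a) * absZ k)).
  assert (HS := vseries_bound (stable_term eta k) K _ Hq
                  (stable_term_bound eps C a M eta HC ltac:(lra) ltac:(lra) Heta k)).
  assert (HU := vseries_bound (fun j => unstable_term eta k (S j)) K _ Hq
                  (unstable_term_bound_succ eps C a M eta HC ltac:(lra) ltac:(lra)
                     (Rlt_le _ _ (proj2 Hq)) Heta k)).
  assert (HK : 0 <= INR d * (K * / (1 - rate eps a))).
  { pose proof (weighted_bound_nonneg eta M a Heta). pose proof (proj1 HC).
    pose proof (exp_pos ((2 * eps + a) * absZ k)). pose proof (pos_INR d).
    assert (0 < / (1 - rate eps a)) by (apply Rinv_0_lt_compat; lra).
    unfold K. repeat apply Rmult_le_pos; nra. }
  unfold green. eapply Rle_trans; [apply vnorm_sub|].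
  replace (green_const eps a C * M * exp ((2 * eps + a) * absZ k))
    with (norm_const d * (2 * (norm_const d * (INR d * (K * / (1 - rate eps a))))))
    by (unfold green_const, K; ring).
  apply Rmult_le_compat_l; [lra|]. nra.
Qed.

Lemma stable_term_succ (eta : seqR d) k j :
  stable_term eta k (S j) = mapply (DF (X (k - 1)%Z)) (stable_term eta (k - 1)%Z j).
Proof.
  unfold stable_term. replace (k - Z.of_nat (S j))%Z with (k - 1 - Z.of_nat j)%Z by lia.
  simpl Dfpow. replace (k - 1 - Z.of_nat j + Z.of_nat j)%Z with (k - 1)%Z by lia. reflexivity.
Qed.

Lemma unstable_term_pred (eta : seqR d) k j :
  mapply (DF (X (k - 1)%Z)) (unstable_term eta (k - 1)%Z (S j)) = unstable_term eta k j.
Proof.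
  unfold unstable_term. replace (k - 1 + Z.of_nat (S j))%Z with (k + Z.of_nat j)%Z by lia.
  simpl Dfinvpow. replace (k + Z.of_nat j - Z.of_nat j)%Z with (k - 1 + 1)%Z by lia.
  apply inverse_along.
Qed.

(** Gamma^{-1} is a right inverse: the series telescope to P^s eta_k + P^u eta_k. *)
Lemma green_solves eps a C M (eta : seqR d) : admissible eps a -> hyp_constant eps C ->
  weighted_bound eta M a -> forall k, Gam (green eta) k = eta k.
Proof.
  intros Hadm HC Heta k. pose proof (rate_range eps a Hadm) as Hq. pose proof Hadm as [He [Ha _]].
  assert (Exs : forall k i, ex_series (fun j => stable_term eta k j i))
    by (intros k' i; apply (vseries_ex _ _ _ Hq
          (stable_term_bound eps C a M eta HC ltac:(lra) ltac:(lra) Heta k'))).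
  assert (Exu : forall k i, ex_series (fun j => unstable_term eta k (S j) i))
    by (intros k' i; apply (vseries_ex _ _ _ Hq
          (unstable_term_bound_succ eps C a M eta HC ltac:(lra) ltac:(lra)
             (Rlt_le _ _ (proj2 Hq)) Heta k'))).
  assert (Exu0 : forall k i, ex_series (fun j => unstable_term eta k j i))
    by (intros k' i; apply ex_series_incr_1, Exu).
  unfold Gamma, green. rewrite mapply_sub, !mapply_vseries by auto.
  rewrite (vseries_ext (fun j => mapply (DF (X (k - 1)%Z)) (stable_term eta (k - 1)%Z j))
                       (fun j => stable_term eta k (S j)))
    by (intros; symmetry; apply stable_term_succ).
  rewrite (vseries_ext (fun j => mapply (DF (X (k - 1)%Z)) (unstable_term eta (k - 1)%Z (S j)))
                       (unstable_term eta k))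
    by (intros; apply unstable_term_pred).
  rewrite (vseries_shift (stable_term eta k)), (vseries_shift (unstable_term eta k)) by auto.
  replace (stable_term eta k 0) with (ps k (eta k))
    by (unfold stable_term; simpl; replace (k - 0)%Z with k by lia; reflexivity).
  replace (unstable_term eta k 0) with (pu k (eta k))
    by (unfold unstable_term; simpl; replace (k + 0)%Z with k by lia; reflexivity).
  transitivity (vadd (ps k (eta k)) (pu k (eta k))); [vec_ring|symmetry; apply ps_pu].
Qed.

Lemma invariant_pred (E : Z -> vec d -> Prop) :
  (forall k v, E k v -> E (k + 1)%Z (mapply (DF (X k)) v)) ->
  forall k v, E (k - 1)%Z v -> E k (mapply (DF (X (k - 1)%Z)) v).
Proof. intros HE k v Hv. replace k with (k - 1 + 1)%Z at 1 by lia. auto. Qed.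

(** Since the splitting is invariant, Gamma xi = eta splits into its stable
    and unstable components. *)
Lemma Gamma_components (xi eta : seqR d) k : Gam xi k = eta k ->
  ps k (eta k) = vsub (ps k (xi k)) (mapply (DF (X (k - 1)%Z)) (ps (k - 1)%Z (xi (k - 1)%Z))) /\
  pu k (eta k) = vsub (pu k (xi k)) (mapply (DF (X (k - 1)%Z)) (pu (k - 1)%Z (xi (k - 1)%Z))).
Proof.
  intros H. destruct (splitting k) as [Ss [Su _]].
  replace (eta k) with
    (vadd (vsub (ps k (xi k)) (mapply (DF (X (k - 1)%Z)) (ps (k - 1)%Z (xi (k - 1)%Z))))
          (vsub (pu k (xi k)) (mapply (DF (X (k - 1)%Z)) (pu (k - 1)%Z (xi (k - 1)%Z))))).
  - apply proj_of_sum.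
    + apply subspace_sub; [auto|apply ps_in|apply (invariant_pred Es Es_invariant), ps_in].
    + apply subspace_sub; [auto|apply pu_in|apply (invariant_pred Eu Eu_invariant), pu_in].
  - rewrite <- H. unfold Gamma.
    rewrite (ps_pu k (xi k)) at 3. rewrite (ps_pu (k - 1)%Z (xi (k - 1)%Z)) at 3.
    rewrite mapply_add. vec_ring.
Qed.

Lemma stable_iterate (xi eta : seqR d) k : (forall k, Gam xi k = eta k) -> forall J,
  ps k (xi k) = vadd (vsum (stable_term eta k) J)
                     (Dfpow DF X J (k - Z.of_nat J) (ps (k - Z.of_nat J)%Z (xi (k - Z.of_nat J)%Z))).
Proof.
  intros HG J. induction J as [|J IH]; [simpl; replace (k - 0)%Z with k by lia; vec_ring|].
  rewrite IH. set (m := (k - Z.of_nat J)%Z).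
  destruct (Gamma_components xi eta m (HG m)) as [Hs _].
  replace (ps m (xi m)) with (vadd (ps m (eta m)) (mapply (DF (X (m - 1)%Z)) (ps (m - 1)%Z (xi (m - 1)%Z))))
    by (rewrite Hs; vec_ring).
  rewrite Dfpow_add.
  replace (k - Z.of_nat (S J))%Z with (m - 1)%Z by (unfold m; lia).
  rewrite <- Dfpow_shift. replace (m - 1 + 1)%Z with m by lia.
  simpl vsum. change (stable_term eta k J) with (Dfpow DF X J m (ps m (eta m))). vec_ring.
Qed.

Lemma unstable_iterate (xi eta : seqR d) k : (forall k, Gam xi k = eta k) -> forall J,
  pu k (xi k) = vsub (Dfinvpow DG X J (k + Z.of_nat J) (pu (k + Z.of_nat J)%Z (xi (k + Z.of_nat J)%Z)))
                     (vsum (fun j => unstable_term eta k (S j)) J).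
Proof.
  intros HG J. induction J as [|J IH]; [simpl; replace (k + 0)%Z with k by lia; vec_ring|].
  rewrite IH. set (m := (k + Z.of_nat J)%Z).
  destruct (Gamma_components xi eta (m + 1)%Z (HG (m + 1)%Z)) as [_ Hu].
  replace (m + 1 - 1)%Z with m in Hu by lia.
  replace (pu m (xi m))
    with (mapply (DG (X (m + 1)%Z)) (vsub (pu (m + 1)%Z (xi (m + 1)%Z)) (pu (m + 1)%Z (eta (m + 1)%Z)))).
  2:{ replace (vsub (pu (m + 1)%Z (xi (m + 1)%Z)) (pu (m + 1)%Z (eta (m + 1)%Z)))
        with (mapply (DF (X m)) (pu m (xi m))) by (rewrite Hu; vec_ring).
      apply inverse_along. }
  rewrite Dfinvpow_shift, Dfinvpow_sub.
  replace (m + 1)%Z with (k + Z.of_nat (S J))%Z by (unfold m; lia).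
  simpl vsum. unfold unstable_term. vec_ring.
Qed.

(** A priori estimate: every tempered solution of Gamma xi = eta is dominated
    like the Green series; the remainders of the iterations decay like q^J. *)
Lemma stable_part_a_priori eps a C M M' (xi eta : seqR d) : admissible eps a -> hyp_constant eps C ->
  weighted_bound eta M a -> weighted_bound xi M' a -> (forall k, Gam xi k = eta k) -> forall k,
  vnorm (ps k (xi k)) <= norm_const d * (INR d * (C * C * M * exp ((2 * eps + a) * absZ k) * / (1 - rate eps a))).
Proof.
  intros Hadm HC Heta Hxi HG k. pose proof (rate_range eps a Hadm) as Hq. pose proof Hadm as [He [Ha _]].
  pose proof (norm_const_ge1 d). pose proof (proj1 HC). pose proof (weighted_bound_nonneg xi M' a Hxi).
  pose proof (exp_pos ((2 * eps + a) * absZ k)).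
  set (R' := C * C * M' * exp ((2 * eps + a) * absZ k)).
  assert (HR : 0 <= R') by (unfold R'; repeat apply Rmult_le_pos; nra).
  apply (le_of_geometric_slack _ _ (norm_const d * R') (rate eps a)); [lra|nra|]. intros J.
  rewrite (stable_iterate xi eta k HG J). eapply Rle_trans; [apply vnorm_add|].
  pose proof (vsum_bound (stable_term eta k) _ _ J Hq
                (stable_term_bound eps C a M eta HC ltac:(lra) ltac:(lra) Heta k)).
  assert (vnorm (Dfpow DF X J (k - Z.of_nat J) (ps (k - Z.of_nat J)%Z (xi (k - Z.of_nat J)%Z)))
            <= R' * rate eps a ^ J)
    by exact (stable_term_bound eps C a M' xi HC ltac:(lra) ltac:(lra) Hxi k J).
  nra.
Qed.

Lemma unstable_part_a_priori eps a C M M' (xi eta : seqR d) : admissible eps a -> hyp_constant eps C ->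
  weighted_bound eta M a -> weighted_bound xi M' a -> (forall k, Gam xi k = eta k) -> forall k,
  vnorm (pu k (xi k)) <= norm_const d * (INR d * (C * C * M * exp ((2 * eps + a) * absZ k) * / (1 - rate eps a))).
Proof.
  intros Hadm HC Heta Hxi HG k. pose proof (rate_range eps a Hadm) as Hq. pose proof Hadm as [He [Ha _]].
  pose proof (norm_const_ge1 d). pose proof (proj1 HC). pose proof (weighted_bound_nonneg xi M' a Hxi).
  pose proof (exp_pos ((2 * eps + a) * absZ k)).
  set (R' := C * C * M' * exp ((2 * eps + a) * absZ k)).
  assert (HR : 0 <= R') by (unfold R'; repeat apply Rmult_le_pos; nra).
  apply (le_of_geometric_slack _ _ (norm_const d * R') (rate eps a)); [lra|nra|]. intros J.
  rewrite (unstable_iterate xi eta k HG J). eapply Rle_trans; [apply vnorm_sub|].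
  pose proof (vsum_bound (fun j => unstable_term eta k (S j)) _ _ J Hq
                (unstable_term_bound_succ eps C a M eta HC ltac:(lra) ltac:(lra)
                   (Rlt_le _ _ (proj2 Hq)) Heta k)).
  assert (vnorm (Dfinvpow DG X J (k + Z.of_nat J) (pu (k + Z.of_nat J)%Z (xi (k + Z.of_nat J)%Z)))
            <= R' * rate eps a ^ J)
    by exact (unstable_term_bound eps C a M' xi HC ltac:(lra) ltac:(lra) Hxi k J).
  nra.
Qed.

Lemma a_priori eps a C M M' (xi eta : seqR d) : admissible eps a -> hyp_constant eps C ->
  weighted_bound eta M a -> weighted_bound xi M' a -> (forall k, Gam xi k = eta k) ->
  weighted_bound xi (green_const eps a C * M) (2 * eps + a).
Proof.
  intros Hadm HC Heta Hxi HG k.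
  pose proof (stable_part_a_priori eps a C M M' xi eta Hadm HC Heta Hxi HG k).
  pose proof (unstable_part_a_priori eps a C M M' xi eta Hadm HC Heta Hxi HG k).
  rewrite (ps_pu k (xi k)). eapply Rle_trans; [apply vnorm_add|].
  replace (green_const eps a C * M * exp ((2 * eps + a) * absZ k))
    with (norm_const d * (2 * (norm_const d * (INR d * (C * C * M * exp ((2 * eps + a) * absZ k)
                                                           * / (1 - rate eps a))))))
    by (unfold green_const; ring).
  apply Rmult_le_compat_l; [pose proof (norm_const_ge1 d); lra|]. lra.
Qed.

Lemma weighted_bound_weaken (eta : seqR d) M a1 a2 : a1 <= a2 ->
  weighted_bound eta M a1 -> weighted_bound eta M a2.
Proof.
  intros Ha H k. pose proof (weighted_bound_nonneg eta M a1 H). pose proof (absZ_nonneg k).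
  eapply Rle_trans; [apply H|]. apply Rmult_le_compat_l; auto. apply exp_mono_le. nra.
Qed.

Lemma green_tempered b : b > 0 -> exists a K, a > 0 /\
  forall (eta : seqR d) M, weighted_bound eta M a -> weighted_bound (green eta) (K * M) b.
Proof.
  intros Hb. destruct (admissible_exists b Hb) as [eps [a [Hadm Hab]]].
  destruct (hyp_constant_exists eps (proj1 Hadm)) as [C HC].
  exists a, (green_const eps a C). split; [apply Hadm|]. intros eta M Heta.
  apply weighted_bound_weaken with (2 * eps + a); auto. apply green_bound; auto.
Qed.

Lemma a_priori_tempered b : b > 0 -> exists a K, a > 0 /\ 0 <= K /\
  forall (xi eta : seqR d) M M', weighted_bound eta M a -> weighted_bound xi M' a ->
    (forall k, Gam xi k = eta k) -> weighted_bound xi (K * M) b.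
Proof.
  intros Hb. destruct (admissible_exists b Hb) as [eps [a [Hadm Hab]]].
  destruct (hyp_constant_exists eps (proj1 Hadm)) as [C HC].
  exists a, (green_const eps a C). split; [apply Hadm|]. split; [apply green_const_nonneg; auto|].
  intros xi eta M M' Heta Hxi HG.
  apply weighted_bound_weaken with (2 * eps + a); auto. apply (a_priori eps a C M M' xi eta); auto.
Qed.

Lemma green_inN (eta : seqR d) : inN eta -> inN (green eta).
Proof.
  intros H. apply inN_of_weighted. intros delta Hd.
  destruct (green_tempered (delta / 2) ltac:(lra)) as [a [K [Ha HK]]].
  destruct (inN_weighted eta H a Ha) as [M [_ HM]].
  exists (K * M), (delta / 2). split; [lra|]. auto.
Qed.

Lemma green_right_inverse (eta : seqR d) : inN eta -> Gam (green eta) = eta.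
Proof.
  intros H. destruct (admissible_exists 1 ltac:(lra)) as [eps [a [Hadm _]]].
  destruct (hyp_constant_exists eps (proj1 Hadm)) as [C HC].
  destruct (inN_weighted eta H a (proj1 (proj2 Hadm))) as [M [_ HM]].
  apply functional_extensionality. apply (green_solves eps a C M); auto.
Qed.

Lemma Gamma_sub (a b : seqR d) k : Gam (seqsub a b) k = vsub (Gam a k) (Gam b k).
Proof. unfold Gamma, seqsub. rewrite mapply_sub. vec_ring. Qed.

(** The a priori estimate with eta = 0 shows that Gamma is injective on N. *)
Lemma Gamma_injective (xi : seqR d) : inN xi -> (forall k, Gam xi k = vzero) -> forall k, xi k = vzero.
Proof.
  intros H HG k. destruct (a_priori_tempered 1 ltac:(lra)) as [a [K [Ha [HK Hap]]]].
  destruct (inN_weighted xi H a Ha) as [M' [_ HM']].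
  assert (Hzero : weighted_bound (fun _ : Z => @vzero d) 0 a)
    by (intros m; rewrite vnorm_vzero; lra).
  pose proof (Hap xi _ 0 M' Hzero HM' HG k) as Hk.
  apply vnorm_le0_eq. rewrite Rmult_0_r, Rmult_0_l in Hk. exact Hk.
Qed.

(** Gamma maps N into N because Df is bounded along X. *)
Hypothesis DF_bounded_along : exists K, 0 <= K /\ forall k, mnorm (DF (X k)) <= K.

Lemma Gamma_inN (eta : seqR d) : inN eta -> inN (Gam eta).
Proof.
  intros H. destruct DF_bounded_along as [K [HK0 HK]].
  apply inN_of_weighted. intros delta Hd.
  destruct (inN_weighted eta H (delta / 2) ltac:(lra)) as [M [HM HMb]].
  exists (norm_const d * (M + K * (M * exp (delta / 2)))), (delta / 2). split; [lra|]. intros k.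
  unfold Gamma. eapply Rle_trans; [apply vnorm_sub|].
  assert (Hshift : exp (delta / 2 * absZ (k - 1)) <= exp (delta / 2) * exp (delta / 2 * absZ k)).
  { pose proof (weight_shift (delta / 2) k 1 (k - 1)%Z ltac:(lra)). simpl in H0. rewrite Rmult_1_r in H0.
    apply H0. replace (k - 1)%Z with (k - Z.of_nat 1)%Z by reflexivity. apply absZ_sub. }
  assert (vnorm (mapply (DF (X (k - 1)%Z)) (eta (k - 1)%Z)) <= K * (M * exp (delta / 2) * exp (delta / 2 * absZ k))).
  { eapply Rle_trans; [apply mapply_bound|].
    apply Rmult_le_compat; [apply mnorm_nonneg|apply vnorm_nonneg|apply HK|].
    eapply Rle_trans; [apply HMb|]. rewrite Rmult_assoc. apply Rmult_le_compat_l; auto. }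
  pose proof (HMb k). pose proof (norm_const_ge1 d). nra.
Qed.

Lemma green_left_inverse (eta : seqR d) : inN eta -> green (Gam eta) = eta.
Proof.
  intros H. pose proof (Gamma_inN eta H) as HG.
  assert (Z : forall k, seqsub (green (Gam eta)) eta k = vzero).
  { apply Gamma_injective; [apply inN_sub; auto using green_inN|].
    intros k. rewrite Gamma_sub, green_right_inverse by auto. vec_ring. }
  apply functional_extensionality; intros k. apply functional_extensionality; intros i.
  assert (Hi := f_equal (fun z => z i) (Z k)). unfold seqsub, vsub, vzero in Hi. simpl in Hi. lra.
Qed.

(** Continuity for the Frechet topology: by linearity, the a priori estimate
    turns ||zeta - eta||_{n'} small into ||Gamma^{-1} zeta - Gamma^{-1} eta||_n small,
    where 1/n' is below the rate a matching the rate 1/n. *)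
Lemma green_continuous : continuousN green.
Proof.
  intros V HV eta [Heta HVeta]. split; [exact Heta|].
  destruct (HV _ HVeta) as [_ [n [Hn [r [Hr Hball]]]]].
  assert (HnR : 0 < / INR n) by (apply Rinv_0_lt_compat, lt_0_INR; auto).
  destruct (a_priori_tempered (/ INR n) HnR) as [a [K [Ha [HK Hap]]]].
  destruct (nat_inv_below a Ha) as [n' [Hn' Hn'a]].
  exists n'. split; auto. exists (r / (2 * (K + 1))). split; [apply Rdiv_lt_0_compat; lra|].
  intros zeta Hzeta Hnear. split; [exact Hzeta|].
  apply Hball; [apply green_inN; auto|].
  destruct (normN_lt_weighted n' _ _ Hnear) as [r' [[Hr0 Hr'] Hw]].
  set (xi := seqsub (green zeta) (green eta)).
  assert (Hxi : inN xi) by (apply inN_sub; apply green_inN; auto).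
  destruct (inN_weighted xi Hxi a Ha) as [M' [_ HM']].
  assert (HG : forall k, Gam xi k = seqsub zeta eta k)
    by (intros k; unfold xi; rewrite Gamma_sub, !green_right_inverse by auto; reflexivity).
  apply (weighted_normN_lt n xi (K * r')).
  - apply (Hap xi (seqsub zeta eta) r' M'); auto. apply weighted_bound_weaken with (/ INR n'); auto.
  - assert (K * r' <= K * (r / (2 * (K + 1)))) by (apply Rmult_le_compat_l; lra).
    assert (K * (r / (2 * (K + 1))) = r * (K / (2 * (K + 1)))) by (field; lra).
    assert (K / (2 * (K + 1)) < 1)
      by (apply Rmult_lt_reg_r with (2 * (K + 1)); [lra|];
          replace (K / (2 * (K + 1)) * (2 * (K + 1))) with K by (field; lra); lra).
    nra.
Qed.

Lemma Gamma_invertible_on_N :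
  (forall eta, inN eta -> inN (Gam eta)) /\
  exists Ginv : seqR d -> seqR d,
    (forall eta, inN eta -> inN (Ginv eta)) /\
    (forall eta, inN eta -> Gam (Ginv eta) = eta) /\
    (forall eta, inN eta -> Ginv (Gam eta) = eta) /\
    continuousN Ginv.
Proof.
  split; [exact Gamma_inN|].
  exists green.
  exact (conj green_inN (conj green_right_inverse (conj green_left_inverse green_continuous))).
Qed.

End GreenOperator.

(** Corollary 3.7: along the orbit of a regularly hyperbolic point of a C^1
    torus diffeomorphism, Df is bounded and inverted by D(f^{-1}), so the
    Green operator above inverts Gamma_{o(x)} continuously on N. *)
Theorem corollary3p7 (d : nat) (F G : vec d -> vec d) (DF DG : vec d -> mat d)
  (x : vec d) :
  torus_C1_diffeo F G DF DG ->
  regularly_hyperbolic F G DF DG x ->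
  (forall eta, inN eta -> inN (Gamma DF (orbit F G x) eta)) /\
  exists Ginv : seqR d -> seqR d,
    (forall eta, inN eta -> inN (Ginv eta)) /\
    (forall eta, inN eta -> Gamma DF (orbit F G x) (Ginv eta) = eta) /\
    (forall eta, inN eta -> Ginv (Gamma DF (orbit F G x) eta) = eta) /\
    continuousN Ginv.
Proof.
  intros TD RH.
  destruct RH as [lam [Hlam [Es [Eu [Hsplit [Hinv [eps0 [Heps0 Hrates]]]]]]]].
  pose proof TD as [HF [_ [HdescF _]]].
  destruct (deriv_bounded F DF HF HdescF) as [K [HK0 HK]].
  apply (Gamma_invertible_on_N d DF DG (orbit F G x) (orbit_deriv_inverse F G DF DG x TD)
           lam Es Eu eps0 Hlam Hsplit).
  - intros k v Hv. apply (Hinv k). exact Hv.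
  - intros k v Hv. apply (Hinv k). exact Hv.
  - exact Heps0.
  - exact Hrates.
  - exists K. split; auto.
Qed.
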